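(* Let $\mathcal{A}$ be an additive category and $\Phi\colon\mathcal{A}\to\mathcal{A}$ an automorphism of additive categories, and let $i\colon\mathcal{A}\to\mathcal{A}_\Phi[t]$ be the inclusion. (1) Let $M$ be a $\mathbb{Z}\mathcal{A}_\Phi[t]$-module. If $\mathrm{pdim}_{\mathbb{Z}\mathcal{A}}(i^*M)\le d$, then $\mathrm{pdim}_{\mathbb{Z}\mathcal{A}_\Phi[t]}(M)\le d+1$. (2) If $\mathcal{A}$ has global dimension $\le d$, then $\mathcal{A}_\Phi[t]$ has global dimension $\le d+1$.
   Context: $\mathcal{A}_\Phi[t]$ has the objects of $\mathcal{A}$ and morphisms $A\to B$ finite sums $\sum_{k\ge0}f_kt^k$ with $f_k\colon\Phi^k(A)\to B$, composed by $(\sum_jg_jt^j)\circ(\sum_kf_kt^k)=\sum_n(\sum_{j+k=n}g_j\circ\Phi^j(f_k))t^n$; $i$ sends $f$ to $f\cdot t^0$. For an additive category $\mathcal{B}$, a $\mathbb{Z}\mathcal{B}$-module is an additive contravariant functor $\mathcal{B}\to$ abelian groups; $i^*$ denotes restriction along $i$ (precomposition). $\mathrm{pdim}_{\mathbb{Z}\mathcal{B}}(M)\le d$ means there is an exact sequence $0\to P_d\to\cdots\to P_0\to M\to0$ of projective $\mathbb{Z}\mathcal{B}$-modules; $\mathcal{B}$ has global dimension $\le d$ if every $\mathbb{Z}\mathcal{B}$-module has projective dimension $\le d$. *)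

From Stdlib Require Import Lia.
From mathcomp Require Import all_boot.

From mathcomp Require Import zify.

Set Implicit Arguments. Unset Strict Implicit. Unset Printing Implicit Defensive.

Definition abgroup_laws (T : Type) (z : T) (a : T -> T -> T) (o : T -> T) : Prop :=
  [/\ forall x y w, a x (a y w) = a (a x y) w, forall x y, a x y = a y x,
      forall x, a z x = x & forall x, a (o x) x = z].

Lemma abg_idem T (z : T) a o : abgroup_laws z a o -> forall x : T, a x x = x -> x = z.
Proof.
case=> aA aC a0 aN x hx.
have h : a (o x) (a x x) = a (o x) x by rewrite hx.
by rewrite aA aN a0 in h.
Qed.

Record rawcat := RawCat {
  Ob : Type;
  Hom : Ob -> Ob -> Type;
  hzero : forall X Y, Hom X Y;
  hadd : forall X Y, Hom X Y -> Hom X Y -> Hom X Y;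
  hopp : forall X Y, Hom X Y -> Hom X Y;
  comp : forall X Y Z, Hom Y Z -> Hom X Y -> Hom X Z;
  idm : forall X, Hom X X }.
Arguments Hom {_} X Y.
Arguments hzero {_ X Y}.
Arguments hadd {_ X Y}.
Arguments hopp {_ X Y}.
Arguments comp {_ X Y Z}.
Arguments idm {_} X.

Definition preadditive (C : rawcat) : Prop :=
  [/\ forall X Y : Ob C, abgroup_laws (@hzero C X Y) hadd hopp,
      forall (W X Y Z : Ob C) (h : Hom Y Z) (g : Hom X Y) (f : Hom W X),
        comp h (comp g f) = comp (comp h g) f,
      forall (X Y : Ob C) (f : Hom X Y), comp (idm Y) f = f /\ comp f (idm X) = f,
      forall (X Y Z : Ob C) (g g' : Hom Y Z) (f : Hom X Y),
        comp (hadd g g') f = hadd (comp g f) (comp g' f)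
    & forall (X Y Z : Ob C) (g : Hom Y Z) (f f' : Hom X Y),
        comp g (hadd f f') = hadd (comp g f) (comp g f')].

Definition has_zero_object (C : rawcat) : Prop :=
  exists Z : Ob C, idm Z = hzero.

Definition has_biproducts (C : rawcat) : Prop :=
  forall X Y : Ob C, exists (P : Ob C) (p1 : Hom P X) (p2 : Hom P Y)
                            (i1 : Hom X P) (i2 : Hom Y P),
    [/\ comp p1 i1 = idm X, comp p2 i2 = idm Y, comp p1 i2 = hzero,
        comp p2 i1 = hzero & hadd (comp i1 p1) (comp i2 p2) = idm P].

Definition additive (C : rawcat) : Prop :=
  [/\ preadditive C, has_zero_object C & has_biproducts C].

Record rawfunctor (C D : rawcat) := RawFunctor {
  fobj : Ob C -> Ob D;
  fmap : forall X Y : Ob C, Hom X Y -> Hom (fobj X) (fobj Y) }.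
Arguments fmap {_ _} _ {X Y}.

Definition additive_functor (C D : rawcat) (F : rawfunctor C D) : Prop :=
  [/\ forall X : Ob C, fmap F (idm X) = idm (fobj F X),
      forall (X Y Z : Ob C) (g : Hom Y Z) (f : Hom X Y),
        fmap F (comp g f) = comp (fmap F g) (fmap F f)
    & forall (X Y : Ob C) (f f' : Hom X Y), fmap F (hadd f f') = hadd (fmap F f) (fmap F f')].

Definition automorphism (C : rawcat) (F : rawfunctor C C) : Prop :=
  [/\ additive_functor F, bijective (fobj F)
    & forall X Y : Ob C, bijective (@fmap C C F X Y)].

(* ZC-modules: additive contravariant functors C -> abelian groups.   *)
Record rawmodule (C : rawcat) := RawModule {
  mob : Ob C -> Type;
  mzero : forall X, mob X;
  madd : forall X, mob X -> mob X -> mob X;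
  mopp : forall X, mob X -> mob X;
  mact : forall X Y : Ob C, Hom X Y -> mob Y -> mob X }.
Arguments mzero {_} _ X.
Arguments madd {_} _ {X}.
Arguments mopp {_} _ {X}.
Arguments mact {_} _ {X Y}.

Definition module_laws (C : rawcat) (M : rawmodule C) : Prop :=
  [/\ forall X, abgroup_laws (mzero M X) (@madd C M X) (@mopp C M X),
      forall (X Y : Ob C) (f : Hom X Y) (x y : mob M Y),
        mact M f (madd M x y) = madd M (mact M f x) (mact M f y),
      forall (X Y : Ob C) (f g : Hom X Y) (x : mob M Y),
        mact M (hadd f g) x = madd M (mact M f x) (mact M g x),
      forall (X : Ob C) (x : mob M X), mact M (idm X) x = x
    & forall (X Y Z : Ob C) (g : Hom Y Z) (f : Hom X Y) (x : mob M Z),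
        mact M (comp g f) x = mact M f (mact M g x)].

Record module (C : rawcat) := Module {
  mraw :> rawmodule C;
  mlaws : module_laws mraw }.

Definition modmap (C : rawcat) (M N : rawmodule C) := forall X : Ob C, mob M X -> mob N X.

Definition is_modhom (C : rawcat) (M N : rawmodule C) (h : modmap M N) : Prop :=
  (forall X (x y : mob M X), h X (madd M x y) = madd N (h X x) (h X y)) /\
  (forall (X Y : Ob C) (f : Hom X Y) (x : mob M Y), h X (mact M f x) = mact N f (h Y x)).

Definition epi_modhom (C : rawcat) (M N : rawmodule C) (h : modmap M N) : Prop :=
  is_modhom h /\ forall X (y : mob N X), exists x, h X x = y.

Definition projective (C : rawcat) (P : rawmodule C) : Prop :=
  forall (M N : module C) (p : modmap M N) (g : modmap P N),
    epi_modhom p -> is_modhom g ->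
    exists h : modmap P M, is_modhom h /\ forall X x, p X (h X x) = g X x.

Definition exact_at (C : rawcat) (M N K : rawmodule C) (f : modmap M N) (g : modmap N K) :
  Prop := forall X (y : mob N X), g X y = mzero K X <-> exists x, f X x = y.

(* pdim M <= d : there is an exact sequence 0 -> P_d -> ... -> P_0 -> M -> 0
   of projective modules (encoded with P_n = 0 for n > d). *)
Definition pdim_le (C : rawcat) (M : rawmodule C) (d : nat) : Prop :=
  exists (P : nat -> module C) (dP : forall n, modmap (P n.+1) (P n))
         (eps : modmap (P 0) M),
    [/\ (forall n, is_modhom (dP n)) /\ epi_modhom eps,
        (forall n, n <= d -> projective (P n)),
        (forall n, d < n -> forall X (x : mob (P n) X), x = mzero (P n) X),
        exact_at (dP 0) eps
      & forall n, exact_at (dP n.+1) (dP n)].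

Definition gldim_le (C : rawcat) (d : nat) : Prop :=
  forall M : module C, pdim_le M d.

Section Poly.
Variables (C : rawcat) (F : rawfunctor C C).
Hypotheses (hC : preadditive C) (hF : additive_functor F).
Local Notation Fo := (fobj F).

Fixpoint powM (k : nat) (X Y : Ob C) (f : Hom X Y) {struct k} :
    Hom (iter k Fo X) (iter k Fo Y) :=
  match k return Hom (iter k Fo X) (iter k Fo Y) with
  | 0 => f
  | k'.+1 => fmap F (powM k' f)
  end.

Definition castD (X X' Y : Ob C) (e : X = X') (f : Hom X Y) : Hom X' Y :=
  eq_rect X (fun Z => Hom Z Y) f X' e.

Lemma iter_split (n : nat) (j : 'I_n.+1) (X : Ob C) :
  iter j Fo (iter (n - j) Fo X) = iter n Fo X.
Proof. by rewrite -iterD subnKC // -ltnS. Qed.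

Definition fsupp (X : nat -> Ob C) (Y : Ob C) (f : forall k, Hom (X k) Y) : Prop :=
  exists N, forall k, N <= k -> f k = hzero.

(* morphisms X -> Y : finite sums  sum_k f_k t^k  with f_k : Phi^k X -> Y *)
Definition PHom (X Y : Ob C) :=
  { f : forall k, Hom (iter k Fo X) Y | fsupp f }.

Lemma add00 (X Y : Ob C) : hadd (@hzero C X Y) hzero = hzero.
Proof. by case: hC => /(_ X Y) [_ _ a0 _] *; rewrite a0. Qed.

Lemma opp0 (X Y : Ob C) : hopp (@hzero C X Y) = hzero.
Proof.
case: hC => /(_ X Y) hg _ _ _ _; have [aA aC a0 aN] := hg.
apply: (abg_idem hg).
have h := aN hzero; rewrite aC a0 in h.
by rewrite {1}h a0 h.
Qed.

Lemma comp0l (X Y Z : Ob C) (f : Hom X Y) : comp (@hzero C Y Z) f = hzero.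
Proof.
case: hC => hg _ _ hl _; apply: (abg_idem (hg X Z)).
by rewrite -hl add00.
Qed.

Lemma comp0r (X Y Z : Ob C) (g : Hom Y Z) : comp g (@hzero C X Y) = hzero.
Proof.
case: hC => hg _ _ _ hr; apply: (abg_idem (hg X Z)).
by rewrite -hr add00.
Qed.

Lemma fmap0 (X Y : Ob C) : fmap F (@hzero C X Y) = hzero.
Proof.
case: hF => _ _ ha; case: hC => hg _ _ _ _; apply: (abg_idem (hg _ _)).
by rewrite -ha add00.
Qed.

Lemma powM0 k (X Y : Ob C) : powM k (@hzero C X Y) = hzero.
Proof. by elim: k => //= k ->; rewrite fmap0. Qed.

Lemma castD0 (X X' Y : Ob C) (e : X = X') : castD e (@hzero C X Y) = hzero.
Proof. by case: X' / e. Qed.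

Definition pzero (X Y : Ob C) : PHom X Y :=
  exist _ (fun k => hzero) (ex_intro _ 0 (fun _ _ => erefl)).

Definition padd (X Y : Ob C) (f g : PHom X Y) : PHom X Y.
Proof.
exists (fun k => hadd (proj1_sig f k) (proj1_sig g k)).
case: f g => f [Nf hf] [g [Ng hg]] /=; exists (maxn Nf Ng) => k hk.
by rewrite hf ?hg ?add00 //; lia.
Defined.

Definition popp (X Y : Ob C) (f : PHom X Y) : PHom X Y.
Proof.
exists (fun k => hopp (proj1_sig f k)).
case: f => f [Nf hf] /=; exists Nf => k hk; by rewrite hf ?opp0.
Defined.

(* coefficient of t^n in (sum_j g_j t^j) o (sum_k f_k t^k) *)
Definition pcoef (X Y Z : Ob C) (g : forall j, Hom (iter j Fo Y) Z)
    (f : forall k, Hom (iter k Fo X) Y) (n : nat) : Hom (iter n Fo X) Z :=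
  foldr (fun (j : 'I_n.+1) acc =>
           hadd (castD (iter_split j X) (comp (g j) (powM j (f (n - j))))) acc)
        hzero (enum 'I_n.+1).

Definition pcomp (X Y Z : Ob C) (g : PHom Y Z) (f : PHom X Y) : PHom X Z.
Proof.
exists (pcoef (proj1_sig g) (proj1_sig f)).
case: g f => g [Ng hg] [f [Nf hf]] /=; exists (Ng + Nf) => n hn.
rewrite /pcoef; elim: (enum _) => //= j s ->.
have [le|lt] := leqP Ng j; first by rewrite hg // comp0l castD0 add00.
by rewrite hf ?powM0 ?comp0r ?castD0 ?add00 //; lia.
Defined.

Definition pmono0 (X Y : Ob C) (f : Hom X Y) : PHom X Y.
Proof.
exists (fun k => match k return Hom (iter k Fo X) Y with 0 => f | _.+1 => hzero end).
by exists 1 => -[].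
Defined.

Definition pid (X : Ob C) : PHom X X := pmono0 (idm X).

Definition polycat : rawcat :=
  {| Ob := Ob C; Hom := PHom; hzero := pzero; hadd := padd; hopp := popp;
     comp := pcomp; idm := pid |}.

(* restriction  i^* M  along the inclusion  i : A -> A_Phi[t],  f |-> f t^0 *)
Definition restrict (M : rawmodule polycat) : rawmodule C :=
  @RawModule C (@mob polycat M) (mzero M) (@madd polycat M) (@mopp polycat M)
    (fun (X Y : Ob C) (f : @Hom C X Y) (x : @mob polycat M Y) =>
       @mact polycat M X Y (pmono0 f) x).

End Poly.

Definition additive_preadditive (C : rawcat) (h : additive C) : preadditive C :=
  let: And3 p _ _ := h in p.
Definition automorphism_additive (C : rawcat) (F : rawfunctor C C)
  (h : automorphism F) : additive_functor F := let: And3 p _ _ := h in p.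

Definition twisted_poly (C : rawcat) (F : rawfunctor C C)
  (hC : additive C) (hF : automorphism F) : rawcat :=
  polycat (additive_preadditive hC) (automorphism_additive hF).

Definition istar (C : rawcat) (F : rawfunctor C C)
  (hC : additive C) (hF : automorphism F) (M : rawmodule (twisted_poly hC hF)) :
  rawmodule C := restrict M.

(* Write [N = i^* M]. Multiplication by [t] is a natural map [N o Phi -> N], and
   the induced module [i_! Q = (+)_k Q(Phi^k -)] fits into a short exact sequence
   [0 -> i_!(N o Phi) -> i_! N -> M -> 0] whose first map is the shift minus
   [i_!] of multiplication by [t]. Induction and twisting by the automorphism [Phi]
   are exact and preserve projectives, so a projective resolution [P] of [N] of length
   [d] gives resolutions [i_!(P o Phi)] and [i_! P] of the outer terms. Lifting
   multiplication by [t] to a chain map [P o Phi -> P] and inducing it up, its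
   mapping cone is a projective resolution of [M] of length [d + 1]. *)

From Pilot Require Import Defs.
From mathcomp Require Import all_boot.
From mathcomp Require Import zify.
From Stdlib Require Import ProofIrrelevance FunctionalExtensionality IndefiniteDescription.
Set Implicit Arguments. Unset Strict Implicit. Unset Printing Implicit Defensive.
Local Notation comp := Defs.comp.

(** * Finite sums in abelian groups *)

Section AbelianGroupSums.
Variables (T : Type) (z : T) (a : T -> T -> T) (o : T -> T).
Hypothesis hg : abgroup_laws z a o.

Definition gsum (I : Type) (s : seq I) (f : I -> T) :=
  foldr (fun i acc => a (f i) acc) z s.

Lemma addgA x y w : a x (a y w) = a (a x y) w. Proof. by case: hg. Qed.
Lemma addgC x y : a x y = a y x. Proof. by case: hg. Qed.
Lemma add0g x : a z x = x. Proof. by case: hg. Qed.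
Lemma addg0 x : a x z = x. Proof. by rewrite addgC add0g. Qed.
Lemma addNg x : a (o x) x = z. Proof. by case: hg. Qed.
Lemma addgN x : a x (o x) = z. Proof. by rewrite addgC addNg. Qed.

Lemma addgI x y y' : a x y = a x y' -> y = y'.
Proof. by move=> /(congr1 (a (o x))); rewrite !addgA addNg !add0g. Qed.

Lemma addg_eq0 x y : a x y = z -> y = o x.
Proof. by move=> h; apply: (@addgI x); rewrite h addgN. Qed.

Lemma oppgK x : o (o x) = x.
Proof. by apply: (@addgI (o x)); rewrite addNg addgN. Qed.

Lemma oppg0 : o z = z.
Proof. by rewrite -(add0g (o z)) addgN. Qed.

Lemma oppgD x y : o (a x y) = a (o x) (o y).
Proof.
apply: (@addgI (a x y)); rewrite addgN [a (o x) _]addgC addgA.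
by rewrite -[a (a x y) _]addgA addgN addg0 addgN.
Qed.

Lemma subg0_eq x y : a x (o y) = z -> x = y.
Proof. by move/addg_eq0 => h; rewrite -(oppgK x) -h oppgK. Qed.

Lemma addgACA x y u v : a (a x y) (a u v) = a (a x u) (a y v).
Proof. by rewrite -!addgA; congr (a x _); rewrite !addgA (addgC y). Qed.

Lemma gsum_cat I (s t : seq I) f : gsum (s ++ t) f = a (gsum s f) (gsum t f).
Proof. by elim: s => [|i s IH] /=; rewrite ?add0g // IH addgA. Qed.

Lemma gsum_split I (s : seq I) f g :
  gsum s (fun i => a (f i) (g i)) = a (gsum s f) (gsum s g).
Proof. by elim: s => [|i s IH] /=; rewrite ?add0g // IH addgACA. Qed.

Lemma gsum0 I (s : seq I) f : (forall i, f i = z) -> gsum s f = z.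
Proof. by move=> h; elim: s => //= i s ->; rewrite h add0g. Qed.

Lemma gsum_eq I (s : seq I) f g : (forall i, f i = g i) -> gsum s f = gsum s g.
Proof. by move=> h; elim: s => //= i s ->; rewrite h. Qed.

Lemma gsum0_in (I : eqType) (s : seq I) f : {in s, forall i, f i = z} -> gsum s f = z.
Proof.
elim: s => //= i s IH h; rewrite h ?mem_head // add0g IH // => j js.
by apply: h; rewrite in_cons js orbT.
Qed.

Lemma gsum_single (I : eqType) (s : seq I) f i0 : uniq s -> i0 \in s ->
  (forall i, i != i0 -> f i = z) -> gsum s f = f i0.
Proof.
elim: s => //= i s IH /andP[ni us]; rewrite in_cons => /orP[/eqP->|iis] h.
  rewrite gsum0_in ?addg0 // => j js; apply: h; apply/eqP=> ej.
  by move: ni; rewrite -ej js.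
by rewrite IH // h ?add0g //; apply/eqP=> ei; move: ni; rewrite ei iis.
Qed.

Lemma gsum_exchange I J (s : seq I) (t : seq J) (f : I -> J -> T) :
  gsum s (fun i => gsum t (f i)) = gsum t (fun j => gsum s (f^~ j)).
Proof. by elim: s => [|i s IH] /=; [rewrite gsum0 | rewrite IH -gsum_split]. Qed.

Lemma gsum_iota_widen (f : nat -> T) (N N' : nat) :
  (forall k, N <= k -> f k = z) -> N <= N' ->
  gsum (iota 0 N') f = gsum (iota 0 N) f.
Proof.
move=> hf le; rewrite -(subnKC le) iotaD gsum_cat [X in a _ X]gsum0_in ?addg0 // => k.
by rewrite mem_iota => /andP[h _]; apply: hf; lia.
Qed.

End AbelianGroupSums.

Lemma gsum_morph (T T' : Type) (z : T) (a : T -> T -> T) (z' : T') (a' : T' -> T' -> T')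
  (phi : T -> T') : phi z = z' -> (forall x y, phi (a x y) = a' (phi x) (phi y)) ->
  forall I (s : seq I) f, phi (gsum z a s f) = gsum z' a' s (fun i => phi (f i)).
Proof. by move=> h0 hD I s f; elim: s => //= i s <-; rewrite hD. Qed.

(** * Modules *)

Section Casts.
Variable C : rawcat.

Definition castM (X X' Y Y' : Ob C) (e1 : X = X') (e2 : Y = Y') (f : Hom X Y) : Hom X' Y' :=
  eq_rect Y (fun Z => Hom X' Z) (eq_rect X (fun Z => Hom Z Y) f X' e1) Y' e2.

Definition castCod (X W Z : Ob C) (e : W = Z) (u : Hom X W) : Hom X Z :=
  eq_rect W (fun Z => Hom X Z) u Z e.

Definition mcast (M : rawmodule C) (X Y : Ob C) (e : X = Y) (x : mob M X) : mob M Y :=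
  eq_rect X (mob M) x Y e.

Lemma castD_irr (X X' Y : Ob C) (e1 e2 : X = X') (f : Hom X Y) : castD e1 f = castD e2 f.
Proof. by rewrite (proof_irrelevance _ e1 e2). Qed.

Lemma castD_id (X Y : Ob C) (e : X = X) (f : Hom X Y) : castD e f = f.
Proof. by rewrite (proof_irrelevance _ e erefl). Qed.

Lemma castDK (X X' X'' Y : Ob C) (e1 : X = X') (e2 : X' = X'') (f : Hom X Y) :
  castD e2 (castD e1 f) = castD (etrans e1 e2) f.
Proof. by case: X'' / e2. Qed.

Lemma castD_add (X X' Y : Ob C) (e : X = X') (f g : Hom X Y) :
  castD e (hadd f g) = hadd (castD e f) (castD e g).
Proof. by case: X' / e. Qed.

Lemma comp_castD (X X' Y Z : Ob C) (e : X = X') (g : Hom Y Z) (f : Hom X Y) :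
  comp g (castD e f) = castD e (comp g f).
Proof. by case: X' / e. Qed.

Lemma castM_irr (X X' Y Y' : Ob C) (e1 e1' : X = X') (e2 e2' : Y = Y') (f : Hom X Y) :
  castM e1 e2 f = castM e1' e2' f.
Proof. by rewrite (proof_irrelevance _ e1 e1') (proof_irrelevance _ e2 e2'). Qed.

Lemma castM_id (X Y : Ob C) (e1 : X = X) (e2 : Y = Y) (f : Hom X Y) : castM e1 e2 f = f.
Proof. by rewrite (proof_irrelevance _ e1 erefl) (proof_irrelevance _ e2 erefl). Qed.

Lemma castM_comp (X X' Y Y' Z Z' : Ob C) (e1 : X = X') (e2 : Y = Y') (e3 : Z = Z')
    (g : Hom Y Z) (f : Hom X Y) :
  castM e1 e3 (comp g f) = comp (castM e2 e3 g) (castM e1 e2 f).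
Proof. by subst. Qed.

Lemma castM_add (X X' Y Y' : Ob C) (e1 : X = X') (e2 : Y = Y') (f g : Hom X Y) :
  castM e1 e2 (hadd f g) = hadd (castM e1 e2 f) (castM e1 e2 g).
Proof. by subst. Qed.

Lemma castM_idm (X X' : Ob C) (e1 e2 : X = X') : castM e1 e2 (idm X) = idm X'.
Proof. by rewrite (proof_irrelevance _ e2 e1); subst. Qed.

Lemma mcast_irr (M : rawmodule C) (X Y : Ob C) (e1 e2 : X = Y) (x : mob M X) :
  mcast e1 x = mcast e2 x.
Proof. by rewrite (proof_irrelevance _ e1 e2). Qed.

Lemma mcast_id (M : rawmodule C) (X : Ob C) (e : X = X) (x : mob M X) : mcast e x = x.
Proof. by rewrite (proof_irrelevance _ e erefl). Qed.

Lemma mcastK (M : rawmodule C) (X Y Z : Ob C) (e1 : X = Y) (e2 : Y = Z) (x : mob M X) :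
  mcast e2 (mcast e1 x) = mcast (etrans e1 e2) x.
Proof. by case: Z / e2. Qed.

Lemma mcast_add (M : rawmodule C) (X Y : Ob C) (e : X = Y) (x y : mob M X) :
  mcast e (madd M x y) = madd M (mcast e x) (mcast e y).
Proof. by case: Y / e. Qed.

Lemma mcast_zero (M : rawmodule C) (X Y : Ob C) (e : X = Y) :
  mcast e (mzero M X) = mzero M Y.
Proof. by case: Y / e. Qed.

Lemma mact_castD (M : rawmodule C) (X X' Y : Ob C) (e : X = X') (f : Hom X Y) (y : mob M Y) :
  mact M (castD e f) y = mcast e (mact M f y).
Proof. by case: X' / e. Qed.

Lemma mact_castM (M : rawmodule C) (X X' Y Y' : Ob C) (e1 : X = X') (e2 : Y = Y')
    (f : Hom X Y) (y : mob M Y') :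
  mact M (castM e1 e2 f) y = mcast e1 (mact M f (mcast (esym e2) y)).
Proof. by subst. Qed.

Lemma hom_mcast (M N : rawmodule C) (h : modmap M N) (X Y : Ob C) (e : X = Y) (x : mob M X) :
  h Y (mcast e x) = mcast e (h X x).
Proof. by case: Y / e. Qed.

End Casts.

Section ModuleLaws.
Variables (C : rawcat) (M : module C).

Lemma mgrp X : abgroup_laws (mzero M X) (@madd C M X) (@mopp C M X).
Proof. by case: (mlaws M). Qed.

Lemma mact_add (X Y : Ob C) (f : Hom X Y) (x y : mob M Y) :
  mact M f (madd M x y) = madd M (mact M f x) (mact M f y).
Proof. by case: (mlaws M). Qed.

Lemma mact_hadd (X Y : Ob C) (f g : Hom X Y) (x : mob M Y) :
  mact M (hadd f g) x = madd M (mact M f x) (mact M g x).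
Proof. by case: (mlaws M). Qed.

Lemma mact_id (X : Ob C) (x : mob M X) : mact M (idm X) x = x.
Proof. by case: (mlaws M). Qed.

Lemma mact_comp (X Y Z : Ob C) (g : Hom Y Z) (f : Hom X Y) (x : mob M Z) :
  mact M (comp g f) x = mact M f (mact M g x).
Proof. by case: (mlaws M). Qed.

Lemma mact0 (X Y : Ob C) (f : Hom X Y) : mact M f (mzero M Y) = mzero M X.
Proof. by apply: (abg_idem (mgrp X)); rewrite -mact_add (add0g (mgrp Y)). Qed.

Lemma mact_opp (X Y : Ob C) (f : Hom X Y) (x : mob M Y) :
  mact M f (mopp M x) = mopp M (mact M f x).
Proof. by apply: (addg_eq0 (mgrp X)); rewrite -mact_add (addgN (mgrp Y)) mact0. Qed.

Lemma mact_hzero (X Y : Ob C) (x : mob M Y) :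
  hadd (@hzero C X Y) hzero = hzero -> mact M hzero x = mzero M X.
Proof. by move=> h0; apply: (abg_idem (mgrp X)); rewrite -mact_hadd h0. Qed.

Lemma mact_gsum (X Y : Ob C) (f : Hom X Y) I (s : seq I) (g : I -> mob M Y) :
  mact M f (gsum (mzero M Y) (@madd C M Y) s g) =
  gsum (mzero M X) (@madd C M X) s (fun i => mact M f (g i)).
Proof. by apply: gsum_morph; [exact: mact0 | exact: mact_add]. Qed.

End ModuleLaws.

Section ModuleHomomorphisms.
Variables (C : rawcat) (M N : module C).
Unset Implicit Arguments.
Variable h : modmap M N.
Set Implicit Arguments.
Hypothesis hh : is_modhom h.

Lemma hom_add X (x y : mob M X) : h X (madd M x y) = madd N (h X x) (h X y).
Proof. by case: hh. Qed.

Lemma hom_act (X Y : Ob C) (f : Hom X Y) (x : mob M Y) : h X (mact M f x) = mact N f (h Y x).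
Proof. by case: hh. Qed.

Lemma hom0 X : h X (mzero M X) = mzero N X.
Proof. by apply: (abg_idem (mgrp N X)); rewrite -hom_add (add0g (mgrp M X)). Qed.

Lemma hom_opp X (x : mob M X) : h X (mopp M x) = mopp N (h X x).
Proof. by apply: (addg_eq0 (mgrp N X)); rewrite -hom_add (addgN (mgrp M X)) hom0. Qed.

Lemma hom_gsum X I (s : seq I) (g : I -> mob M X) :
  h X (gsum (mzero M X) (@madd C M X) s g) =
  gsum (mzero N X) (@madd C N X) s (fun i => h X (g i)).
Proof. by apply: gsum_morph; [exact: hom0 | exact: hom_add]. Qed.

End ModuleHomomorphisms.

Lemma hom_comp (C : rawcat) (M N K : module C) (f : modmap M N) (g : modmap N K) :
  is_modhom f -> is_modhom g -> is_modhom (M:=M) (N:=K) (fun X x => g X (f X x)).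
Proof.
move=> hf hg; split => [X x y | X Y h x]; first by rewrite (hom_add hf) (hom_add hg).
by rewrite (hom_act hf) (hom_act hg).
Qed.

Lemma hom_sub (C : rawcat) (M N : module C) (f g : modmap M N) :
  is_modhom f -> is_modhom g ->
  is_modhom (M:=M) (N:=N) (fun X x => madd N (f X x) (mopp N (g X x))).
Proof.
move=> hf hg; split => [X x y | X Y h x].
  by rewrite (hom_add hf) (hom_add hg) (oppgD (mgrp N X)) (addgACA (mgrp N X)).
by rewrite (hom_act hf) (hom_act hg) mact_add mact_opp.
Qed.

Section ModuleConstructions.
Variable C : rawcat.

Definition dsum_raw (M1 M2 : rawmodule C) : rawmodule C :=
  @RawModule C (fun X => (mob M1 X * mob M2 X)%type)
    (fun X => (mzero M1 X, mzero M2 X))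
    (fun X x y => (madd M1 x.1 y.1, madd M2 x.2 y.2))
    (fun X x => (mopp M1 x.1, mopp M2 x.2))
    (fun X Y f x => (mact M1 f x.1, mact M2 f x.2)).

Lemma dsum_laws (M1 M2 : module C) : module_laws (dsum_raw M1 M2).
Proof.
split=> [X||||]; first split.
- by move=> x y w /=; rewrite !(addgA (mgrp _ X)).
- by move=> x y /=; rewrite (addgC (mgrp M1 X)) (addgC (mgrp M2 X)).
- by move=> [x1 x2] /=; rewrite !(add0g (mgrp _ X)).
- by move=> x /=; rewrite !(addNg (mgrp _ X)).
- by move=> X Y f x y /=; rewrite !mact_add.
- by move=> X Y f g x /=; rewrite !mact_hadd.
- by move=> X [x1 x2] /=; rewrite !mact_id.
- by move=> X Y Z g f x /=; rewrite !mact_comp.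
Qed.

Definition dsum (M1 M2 : module C) : module C := Module (dsum_laws M1 M2).

Definition zmod_raw : rawmodule C :=
  @RawModule C (fun _ => unit) (fun _ => tt) (fun _ _ _ => tt) (fun _ _ => tt)
    (fun _ _ _ _ => tt).

Lemma zmod_laws : module_laws zmod_raw.
Proof.
have u (x y : unit) : x = y by case: x; case: y.
by split=> *; try split=> *; apply: u.
Qed.

Definition zmod : module C := Module zmod_laws.

Lemma projective_trivial (P : module C) :
  (forall X (x : mob P X), x = mzero P X) -> projective P.
Proof.
move=> hP M N p g [hp _] hg; exists (fun X _ => mzero M X); split.
  by split=> [X x y | X Y f x]; rewrite ?(add0g (mgrp M X)) ?mact0.
by move=> X x; rewrite (hom0 hp) (hP X x) (hom0 hg).
Qed.

Lemma zmod_projective : projective zmod.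
Proof. by apply: projective_trivial => X []. Qed.

Lemma dsum_projective (M1 M2 : module C) :
  projective M1 -> projective M2 -> projective (dsum M1 M2).
Proof.
move=> h1 h2 M N p g hp hg.
pose g1 : modmap M1 N := fun X x => g X (x, mzero M2 X).
pose g2 : modmap M2 N := fun X x => g X (mzero M1 X, x).
have hg1 : is_modhom g1.
  split=> [X x y | X Y f x]; rewrite /g1 -?(hom_add hg) -?(hom_act hg) /=.
    by rewrite (add0g (mgrp M2 X)).
  by rewrite mact0.
have hg2 : is_modhom g2.
  split=> [X x y | X Y f x]; rewrite /g2 -?(hom_add hg) -?(hom_act hg) /=.
    by rewrite (add0g (mgrp M1 X)).
  by rewrite mact0.
have [k1 [hk1 pk1]] := h1 M N p g1 hp hg1.
have [k2 [hk2 pk2]] := h2 M N p g2 hp hg2.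
exists (fun X x => madd M (k1 X x.1) (k2 X x.2)); split.
  split=> [X x y | X Y f x] /=.
    by rewrite (hom_add hk1) (hom_add hk2) (addgACA (mgrp M X)).
  by rewrite (hom_act hk1) (hom_act hk2) mact_add.
move=> X [x1 x2] /=; rewrite (hom_add hp.1) pk1 pk2 /g1 /g2 -(hom_add hg) /=.
by rewrite (addg0 (mgrp M1 X)) (add0g (mgrp M2 X)).
Qed.

Section Kernel.
Variables (M N : module C).
Unset Implicit Arguments.
Variable phi : modmap M N.
Set Implicit Arguments.
Hypothesis hphi : is_modhom phi.

Definition ker_ob X := {x : mob M X | phi X x = mzero N X}.

Lemma ker_ob_ext X (x y : ker_ob X) : sval x = sval y -> x = y.
Proof. by case: x y => x hx [y hy] /= e; subst; rewrite (proof_irrelevance _ hx hy). Qed.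

Definition ker_raw : rawmodule C.
Proof.
refine (@RawModule C ker_ob (fun X => exist _ (mzero M X) (hom0 hphi X))
  (fun X x y => exist _ (madd M (sval x) (sval y)) _)
  (fun X x => exist _ (mopp M (sval x)) _)
  (fun X Y f x => exist _ (mact M f (sval x)) _)).
- by rewrite (hom_add hphi) (svalP x) (svalP y) (add0g (mgrp N X)).
- by rewrite (hom_opp hphi) (svalP x) (oppg0 (mgrp N X)).
- by rewrite (hom_act hphi) (svalP x) mact0.
Defined.

Lemma ker_laws : module_laws ker_raw.
Proof.
split=> [X||||]; first split.
- by move=> x y w; apply: ker_ob_ext => /=; rewrite (addgA (mgrp M X)).
- by move=> x y; apply: ker_ob_ext => /=; rewrite (addgC (mgrp M X)).
- by move=> x; apply: ker_ob_ext => /=; rewrite (add0g (mgrp M X)).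
- by move=> x; apply: ker_ob_ext => /=; rewrite (addNg (mgrp M X)).
- by move=> X Y f x y; apply: ker_ob_ext => /=; rewrite mact_add.
- by move=> X Y f g x; apply: ker_ob_ext => /=; rewrite mact_hadd.
- by move=> X x; apply: ker_ob_ext => /=; rewrite mact_id.
- by move=> X Y Z g f x; apply: ker_ob_ext => /=; rewrite mact_comp.
Qed.

Definition kermod : module C := Module ker_laws.

End Kernel.

End ModuleConstructions.

(** * Twisting by an automorphism *)

Section Twist.
Variables (C : rawcat) (F : rawfunctor C C) (hF : additive_functor F).
Local Notation Fo := (fobj F).

Lemma fmap_id (X : Ob C) : fmap F (idm X) = idm (Fo X). Proof. by case: hF. Qed.
Lemma fmap_comp (X Y Z : Ob C) (g : Hom Y Z) (f : Hom X Y) :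
  fmap F (comp g f) = comp (fmap F g) (fmap F f). Proof. by case: hF. Qed.
Lemma fmap_add (X Y : Ob C) (f f' : Hom X Y) :
  fmap F (hadd f f') = hadd (fmap F f) (fmap F f'). Proof. by case: hF. Qed.

Lemma fmap_castM (X X' Y Y' : Ob C) (e1 : X = X') (e2 : Y = Y') (f : Hom X Y) :
  fmap F (castM e1 e2 f) = castM (congr1 Fo e1) (congr1 Fo e2) (fmap F f).
Proof. by subst. Qed.

Definition twist_raw (Q : rawmodule C) : rawmodule C :=
  @RawModule C (fun X => mob Q (Fo X)) (fun X => mzero Q (Fo X)) (fun X => @madd C Q (Fo X))
    (fun X => @mopp C Q (Fo X)) (fun X Y f x => mact Q (fmap F f) x).

Lemma twist_laws (Q : module C) : module_laws (twist_raw Q).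
Proof.
split=> [X | X Y f x y | X Y f g x | X x | X Y Z g f x] /=.
- exact: (mgrp Q (Fo X)).
- exact: mact_add.
- by rewrite fmap_add mact_hadd.
- by rewrite fmap_id mact_id.
- by rewrite fmap_comp mact_comp.
Qed.

Definition twist (Q : module C) : module C := Module (twist_laws Q).

Lemma twist_mcast (Q : rawmodule C) (X Y : Ob C) (e : X = Y) (x : mob Q (Fo X)) :
  @mcast C (twist_raw Q) X Y e x = @mcast C Q _ _ (congr1 Fo e) x.
Proof. by subst. Qed.

Lemma twist_hom (Q Q' : module C) (phi : modmap Q Q') : is_modhom phi ->
  is_modhom (M := twist Q) (N := twist Q') (fun X => phi (Fo X)).
Proof. by case=> h1 h2; split=> [X x y | X Y f x] /=; [exact: h1 | exact: h2]. Qed.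

Section TwistByAutomorphism.
Variables (psi : Ob C -> Ob C) (hpsi1 : cancel Fo psi) (hpsi2 : cancel psi Fo).
Unset Implicit Arguments.
Variable finv : forall X Y : Ob C, Hom (Fo X) (Fo Y) -> Hom X Y.
Set Implicit Arguments.
Hypothesis hfinv1 : forall X Y : Ob C, cancel (@fmap C C F X Y) (finv X Y).
Hypothesis hfinv2 : forall X Y : Ob C, cancel (finv X Y) (@fmap C C F X Y).

Local Notation Eo Y := (esym (hpsi2 Y)).

Definition Finv (Y' Y : Ob C) (u : Hom Y' Y) : Hom (psi Y') (psi Y) :=
  finv _ _ (castM (Eo Y') (Eo Y) u).

Lemma fmap_Finv (Y' Y : Ob C) (u : Hom Y' Y) : fmap F (Finv u) = castM (Eo Y') (Eo Y) u.
Proof. exact: hfinv2. Qed.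

Lemma fmap_inj (X Y : Ob C) (f g : Hom X Y) : fmap F f = fmap F g -> f = g.
Proof. by move=> /(congr1 (finv X Y)); rewrite !hfinv1. Qed.

Lemma Finv_comp (X Y Z : Ob C) (g : Hom Y Z) (f : Hom X Y) :
  Finv (comp g f) = comp (Finv g) (Finv f).
Proof. by apply: fmap_inj; rewrite fmap_comp !fmap_Finv (castM_comp _ (Eo Y)). Qed.

Lemma Finv_add (X Y : Ob C) (f g : Hom X Y) : Finv (hadd f g) = hadd (Finv f) (Finv g).
Proof. by apply: fmap_inj; rewrite fmap_add !fmap_Finv castM_add. Qed.

Lemma Finv_id (X : Ob C) : Finv (idm X) = idm (psi X).
Proof. by apply: fmap_inj; rewrite fmap_id !fmap_Finv castM_idm. Qed.

Lemma Finv_fmap (X' X : Ob C) (f : Hom X' X) :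
  Finv (fmap F f) = castM (esym (hpsi1 X')) (esym (hpsi1 X)) f.
Proof. by apply: fmap_inj; rewrite fmap_Finv fmap_castM; apply: castM_irr. Qed.

Definition untwist_raw (M : rawmodule C) : rawmodule C :=
  @RawModule C (fun Y => mob M (psi Y)) (fun Y => mzero M (psi Y))
    (fun Y => @madd C M (psi Y)) (fun Y => @mopp C M (psi Y))
    (fun Y' Y u x => mact M (Finv u) x).

Lemma untwist_laws (M : module C) : module_laws (untwist_raw M).
Proof.
split=> [X | X Y f x y | X Y f g x | X x | X Y Z g f x] /=.
- exact: (mgrp M (psi X)).
- exact: mact_add.
- by rewrite Finv_add mact_hadd.
- by rewrite Finv_id mact_id.
- by rewrite Finv_comp mact_comp.
Qed.

Definition untwist (M : module C) : module C := Module (untwist_laws M).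

(* A lifting problem for [twist Q] is the untwisted lifting problem for [Q]. *)
Lemma twist_projective_of_inverse (Q : module C) : projective Q -> projective (twist Q).
Proof.
move=> hQ M N p g [hp sp] hg.
pose gu : modmap Q (untwist N) := fun Y q => g (psi Y) (mcast (Eo Y) q).
have hgu : is_modhom gu.
  split=> [X x y | X Y f x] /=; first by rewrite /gu mcast_add (hom_add hg).
  by rewrite /gu -(hom_act hg) /= fmap_Finv mact_castM mcastK mcast_id.
have hpu : epi_modhom (M := untwist M) (N := untwist N) (fun Y => p (psi Y)).
  by split=> [|X y]; [split=> *; [exact: (hom_add hp) | exact: (hom_act hp)] | exact: sp].
have [h [hh ph]] := hQ (untwist M) (untwist N) (fun Y => p (psi Y)) gu hpu hgu.
exists (fun X q => mcast (hpsi1 X) (h (Fo X) q)); split.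
  split=> [X x y | X Y f x] /=; first by rewrite (hom_add hh) mcast_add.
  rewrite (hom_act hh) /= Finv_fmap mact_castM mcastK mcast_id.
  by congr (mact M f _); apply: mcast_irr.
move=> X q; rewrite (hom_mcast p) ph /gu.
move: (hpsi1 X) (Eo (Fo X)); move: (psi (Fo X)) => Z e e'.
by subst; rewrite !mcast_id.
Qed.

End TwistByAutomorphism.

Lemma twist_projective (Q : module C) :
  bijective Fo -> (forall X Y : Ob C, bijective (@fmap C C F X Y)) ->
  projective Q -> projective (twist Q).
Proof.
case=> psi hpsi1 hpsi2 hhom.
have finvP X Y : { g | cancel (@fmap C C F X Y) g /\ cancel g (@fmap C C F X Y) }.
  by apply: constructive_indefinite_description; case: (hhom X Y) => g h1 h2; exists g.
exact: (twist_projective_of_inverse hpsi1 hpsi2 (fun X Y => (svalP (finvP X Y)).1)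
                                               (fun X Y => (svalP (finvP X Y)).2)).
Qed.

End Twist.

(** * Resolutions and mapping cones *)

Section Resolutions.
Variable C : rawcat.

Definition is_resolution (P : nat -> module C) (dP : forall n, modmap (P n.+1) (P n))
    (N : rawmodule C) (eps : modmap (P 0) N) : Prop :=
  [/\ forall n, is_modhom (dP n), epi_modhom eps, exact_at (dP 0) eps
    & forall n, exact_at (dP n.+1) (dP n)].

Lemma pdim_leP (N : rawmodule C) d :
  pdim_le N d <->
  exists (P : nat -> module C) (dP : forall n, modmap (P n.+1) (P n)) (eps : modmap (P 0) N),
    [/\ is_resolution dP eps, forall n, n <= d -> projective (P n)
      & forall n, d < n -> forall X (x : mob (P n) X), x = mzero (P n) X].
Proof.
split=> -[P [dP [eps]]].
  by case=> -[hdP heps] hproj hzero ex0 exS; exists P, dP, eps.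
by case=> -[hdP heps ex0 exS] hproj hzero; exists P, dP, eps.
Qed.

Lemma projective_of_pdim_le (P : nat -> module C) d :
  (forall n, n <= d -> projective (P n)) ->
  (forall n, d < n -> forall X (x : mob (P n) X), x = mzero (P n) X) ->
  forall n, projective (P n).
Proof.
move=> hproj hzero n; have [le|lt] := leqP n d; first exact: hproj.
by apply: projective_trivial; apply: hzero.
Qed.

Definition short_exact (K L M : module C) (f : modmap K L) (g : modmap L M) : Prop :=
  [/\ epi_modhom g, forall X x, f X x = mzero L X -> x = mzero K X & exact_at f g].

End Resolutions.

Section ResolutionLemmas.
Variables (C : rawcat) (P : nat -> module C) (N : module C).
Unset Implicit Arguments.
Variables (dP : forall n, modmap (P n.+1) (P n)) (eps : modmap (P 0) N).
Set Implicit Arguments.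
Hypothesis resP : is_resolution dP eps.

Lemma resolution_eps_d X y : eps X (dP 0 X y) = mzero N X.
Proof. by case: resP => _ _ ex0 _; apply/(ex0 X _).2; exists y. Qed.

Lemma resolution_dd n X y : dP n X (dP n.+1 X y) = mzero (P n) X.
Proof. by case: resP => _ _ _ exS; apply/(exS n X _).2; exists y. Qed.

End ResolutionLemmas.

Lemma twist_resolution (C : rawcat) (F : rawfunctor C C) (hF : additive_functor F)
    (P : nat -> module C) (dP : forall n, modmap (P n.+1) (P n))
    (N : module C) (eps : modmap (P 0) N) :
  is_resolution dP eps ->
  is_resolution (P := fun n => twist hF (P n)) (N := twist hF N)
    (fun n X => dP n (fobj F X)) (fun X => eps (fobj F X)).
Proof.
case=> hdP [heps seps] ex0 exS; split=> [n | | X y | n X y].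
- exact: twist_hom.
- by split=> [|X y]; [exact: twist_hom | exact: seps].
- exact: ex0.
- exact: exS.
Qed.

Section Comparison.
Variables (C : rawcat) (P Q : nat -> module C) (NP NQ : module C).
Unset Implicit Arguments.
Variables (dP : forall n, modmap (P n.+1) (P n)) (dQ : forall n, modmap (Q n.+1) (Q n)).
Variables (epsP : modmap (P 0) NP) (epsQ : modmap (Q 0) NQ) (alpha : modmap NP NQ).
Set Implicit Arguments.
Hypotheses (resP : is_resolution dP epsP) (resQ : is_resolution dQ epsQ).
Hypothesis halpha : is_modhom alpha.
Hypothesis projP : forall n, projective (P n).

Let hdQ : forall n, is_modhom (dQ n). Proof. by case: resQ. Qed.

Unset Implicit Arguments.
Definition augQ n : module C := if n is m.+1 then Q m else NQ.
Definition augdQ n : modmap (Q n) (augQ n) :=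
  match n as n0 return modmap (Q n0) (augQ n0) with 0 => epsQ | m.+1 => dQ m end.
Set Implicit Arguments.

Lemma augdQ_hom n : is_modhom (augdQ n).
Proof. by case: n => [|n] /=; [case: resQ => _ [] | exact: hdQ]. Qed.

Lemma augdQ_exact n : exact_at (dQ n) (augdQ n).
Proof. by case: resQ; case: n. Qed.

Definition lift_stage n := { a : modmap (P n) (Q n) |
  is_modhom a /\ forall X y, augdQ n X (a X (dP n X y)) = mzero (augQ n) X }.

Lemma lift_base : exists a : modmap (P 0) (Q 0),
  (is_modhom a /\ forall X y, augdQ 0 X (a X (dP 0 X y)) = mzero (augQ 0) X) /\
  forall X x, epsQ X (a X x) = alpha X (epsP X x).
Proof.
have hg : is_modhom (M:=P 0) (N:=NQ) (fun X x => alpha X (epsP X x)).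
  by apply: hom_comp => //; case: resP => _ [].
have heQ : epi_modhom epsQ by case: resQ.
have [a [ha pa]] := @projP 0 (Q 0) NQ epsQ _ heQ hg.
exists a; split => //; split => // X y /=.
by rewrite pa (resolution_eps_d resP) (hom0 halpha).
Qed.

(* [P n.+1] lifts [a o dP n] through [dQ n] onto its image, the kernel of [augdQ n]. *)
Lemma lift_step n (s : lift_stage n) : exists a : modmap (P n.+1) (Q n.+1),
  (is_modhom a /\ forall X y, augdQ n.+1 X (a X (dP n.+1 X y)) = mzero (augQ n.+1) X) /\
  forall X x, dQ n X (a X x) = sval s X (dP n X x).
Proof.
case: s => a [ha inv] /=.
have hdP : is_modhom (dP n) by case: resP.
pose K := kermod (augdQ_hom n).
pose p : modmap (Q n.+1) K :=
  fun X x => exist _ (dQ n X x) ((@augdQ_exact n X (dQ n X x)).2 (ex_intro _ x erefl)).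
pose g : modmap (P n.+1) K := fun X y => exist _ (a X (dP n X y)) (inv X y).
have hp : epi_modhom p.
  split.
    by split=> [X x y | X Y f x]; apply: ker_ob_ext => /=;
      rewrite ?(hom_add (hdQ n)) ?(hom_act (hdQ n)).
  move=> X [y hy]; have [x hx] := (@augdQ_exact n X y).1 hy.
  by exists x; apply: ker_ob_ext.
have hg : is_modhom g.
  by split=> [X x y | X Y f x]; apply: ker_ob_ext => /=;
    rewrite ?(hom_add hdP) ?(hom_add ha) ?(hom_act hdP) ?(hom_act ha).
have [h [hh ph]] := @projP n.+1 (Q n.+1) K p g hp hg.
exists h; split; last by move=> X x; have := congr1 sval (ph X x).
split=> // X y /=.
have := congr1 sval (ph X (dP n.+1 X y)); rewrite /= => ->.
by rewrite (resolution_dd resP) (hom0 ha).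
Qed.

Fixpoint lift_chain n : lift_stage n :=
  match n with
  | 0 => let w := constructive_indefinite_description _ lift_base in
         exist _ (sval w) (proj2_sig w).1
  | m.+1 => let w := constructive_indefinite_description _ (lift_step (lift_chain m)) in
            exist _ (sval w) (proj2_sig w).1
  end.

Lemma chain_map_lift : exists am : forall n, modmap (P n) (Q n),
  [/\ forall n, is_modhom (am n),
      forall X x, epsQ X (am 0 X x) = alpha X (epsP X x)
    & forall n X x, dQ n X (am n.+1 X x) = am n X (dP n X x)].
Proof.
exists (fun n => sval (lift_chain n)); split; first by move=> n; case: (lift_chain n) => a [].
  by move=> X x /=; case: constructive_indefinite_description => a [_ h] /=.
by move=> n X x /=; case: constructive_indefinite_description => a [_ h] /=.
Qed.

End Comparison.

Section ConeMap.
Variables (C : rawcat) (M1 M2 N1 N2 : module C).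
Unset Implicit Arguments.
Variables (u : modmap M1 N1) (v : modmap M2 N1) (w : modmap M2 N2).
Set Implicit Arguments.
Hypotheses (hu : is_modhom u) (hv : is_modhom v) (hw : is_modhom w).

Definition conemap : modmap (dsum M1 M2) (dsum N1 N2) :=
  fun X x => (madd N1 (u X x.1) (v X x.2), mopp N2 (w X x.2)).

Lemma conemap_hom : is_modhom conemap.
Proof.
split=> [X x y | X Y f x]; rewrite /conemap /=.
  rewrite (hom_add hu) (hom_add hv) (hom_add hw) (oppgD (mgrp N2 X)).
  by rewrite (addgACA (mgrp N1 X)).
by rewrite (hom_act hu) (hom_act hv) (hom_act hw) mact_add mact_opp.
Qed.

End ConeMap.

Section MappingCone.
Variables (D : rawcat) (L K : nat -> module D) (LL KK M : module D).
Unset Implicit Arguments.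
Variables (dL : forall n, modmap (L n.+1) (L n)) (dK : forall n, modmap (K n.+1) (K n)).
Variables (eL : modmap (L 0) LL) (eK : modmap (K 0) KK) (del : modmap KK LL) (eps : modmap LL M).
Variable dn : forall n, modmap (K n) (L n).
Set Implicit Arguments.
Hypotheses (resL : is_resolution dL eL) (resK : is_resolution dK eK).
Hypothesis ses : short_exact del eps.
Hypothesis hdn : forall n, is_modhom (dn n).
Hypothesis dn_eL : forall X (a : mob (K 0) X), eL X (dn 0 X a) = del X (eK X a).
Hypothesis dn_dL : forall n X (a : mob (K n.+1) X), dL n X (dn n.+1 X a) = dn n X (dK n X a).

Unset Implicit Arguments.
Let hdL : forall n, is_modhom (dL n). Proof. by case: resL. Qed.
Let hdK : forall n, is_modhom (dK n). Proof. by case: resK. Qed.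
Let heL : is_modhom eL. Proof. by case: resL => _ []. Qed.
Let exL0 : exact_at (dL 0) eL. Proof. by case: resL. Qed.
Let exL : forall n, exact_at (dL n.+1) (dL n). Proof. by case: resL. Qed.
Let seL : forall X z, exists a, eL X a = z. Proof. by case: resL => _ []. Qed.
Let seK : forall X z, exists a, eK X a = z. Proof. by case: resK => _ []. Qed.
Let exK0 : exact_at (dK 0) eK. Proof. by case: resK. Qed.
Let exK : forall n, exact_at (dK n.+1) (dK n). Proof. by case: resK. Qed.
Let del_inj : forall X z, del X z = mzero LL X -> z = mzero KK X. Proof. by case: ses. Qed.
Let exdel : exact_at del eps. Proof. by case: ses. Qed.
Let heps : is_modhom eps. Proof. by case: ses => -[]. Qed.
Let seps : forall X y, exists b, eps X b = y. Proof. by case: ses => -[]. Qed.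

Definition shiftK n : module D := if n is m.+1 then K m else zmod D.
Definition dshiftK n : modmap (K n) (shiftK n) :=
  match n as n0 return modmap (K n0) (shiftK n0) with 0 => fun X _ => tt | m.+1 => dK m end.

Definition cone n : module D := dsum (L n) (shiftK n).
Definition dcone n : modmap (cone n.+1) (cone n) := conemap (dL n) (dn n) (dshiftK n).
Definition econe : modmap (cone 0) M := fun X y => eps X (eL X y.1).
Set Implicit Arguments.

Lemma dshiftK_hom n : is_modhom (dshiftK n).
Proof. by case: n => [|n] /=; [split | exact: hdK]. Qed.

Lemma econe_epi : epi_modhom econe.
Proof.
split; first by split=> [X x y | X Y f x]; rewrite /econe /= ?(hom_add heL) ?(hom_add heps)
  ?(hom_act heL) ?(hom_act heps).
move=> X y; have [b hb] := seps X y; have [a ha] := seL X b.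
by exists (a, tt); rewrite /econe /= ha hb.
Qed.

Lemma eL_dL X (c : mob (L 1) X) : eL X (dL 0 X c) = mzero LL X.
Proof. by apply/(exL0 X _).2; exists c. Qed.

Lemma dL_dL n X (c : mob (L n.+2) X) : dL n X (dL n.+1 X c) = mzero (L n) X.
Proof. by apply/(exL n X _).2; exists c. Qed.

Lemma dK_dK n X (c : mob (K n.+2) X) : dK n X (dK n.+1 X c) = mzero (K n) X.
Proof. by apply/(exK n X _).2; exists c. Qed.

Lemma cone_exact0 : exact_at (dcone 0) econe.
Proof.
move=> X [b u]; split; last first.
  case=> [[c a] <-]; rewrite /econe /dcone /conemap /=.
  by rewrite (hom_add heL) eL_dL dn_eL (add0g (mgrp LL X)); apply/(exdel X _).2; exists (eK X a).
rewrite /econe /= => /(exdel X _).1 [z hz].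
have [a ha] := seK X z.
have hr : eL X (madd (L 0) b (mopp (L 0) (dn 0 X a))) = mzero LL X.
  by rewrite (hom_add heL) (hom_opp heL) dn_eL ha hz (addgN (mgrp LL X)).
have [c hc] := (exL0 X _).1 hr.
exists (c, a); rewrite /dcone /conemap /=; case: u; congr pair.
by rewrite hc -(addgA (mgrp _ X)) (addNg (mgrp _ X)) (addg0 (mgrp _ X)).
Qed.

(* The [K]-component of a cycle of the cone is a cycle of [K] (in degree 0 because
   [del] is injective), hence a boundary. *)
Lemma cone_cycle_boundary n X (b : mob (L n.+1) X) (a : mob (K n) X) :
  madd (L n) (dL n X b) (dn n X a) = mzero (L n) X ->
  mopp (shiftK n) (dshiftK n X a) = mzero (shiftK n) X ->
  exists c, dK n X c = a.
Proof.
case: n b a => [|m] b a h1 h2.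
  apply/(exK0 X a).1; apply: del_inj; rewrite -dn_eL.
  move: (congr1 (eL X) h1); rewrite (hom_add heL) eL_dL (add0g (mgrp LL X)) (hom0 heL).
  by move=> ->.
apply/(exK m X a).1.
by move: h2 => /= h2; rewrite -(oppgK (mgrp _ X) (dK m X a)) h2 (oppg0 (mgrp _ X)).
Qed.

Lemma cone_exactS n : exact_at (dcone n.+1) (dcone n).
Proof.
move=> X [b a]; split.
  rewrite /dcone /conemap /= => -[h1 h2].
  have [c hc] := cone_cycle_boundary h1 h2.
  have hr : dL n X (madd (L n.+1) b (dn n.+1 X c)) = mzero (L n) X.
    by rewrite (hom_add (hdL n)) dn_dL hc.
  have [e he] := (exL n X _).1 hr.
  exists (e, mopp (K n.+1) c); rewrite /dcone /conemap /=; congr pair.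
    by rewrite he (hom_opp (hdn _)) -(addgA (mgrp _ X)) (addgN (mgrp _ X)) (addg0 (mgrp _ X)).
  by rewrite (hom_opp (hdK n)) (oppgK (mgrp _ X)) hc.
case=> -[e c] <-; rewrite /dcone /conemap /=.
rewrite (hom_add (hdL n)) dL_dL dn_dL (add0g (mgrp _ X)) (hom_opp (hdn n)) (addgN (mgrp _ X)).
congr pair; rewrite (hom_opp (dshiftK_hom n)) (oppgK (mgrp _ X)).
by case: n b a e c => [|m] b a e c //=; apply: dK_dK.
Qed.

Lemma cone_resolution : is_resolution dcone econe.
Proof.
split; [move=> n | exact: econe_epi | exact: cone_exact0 | exact: cone_exactS].
by apply: conemap_hom; [exact: hdL | exact: hdn | exact: dshiftK_hom].
Qed.

End MappingCone.

(** * Morphisms of [A_Phi[t]] *)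

Section PolyMorphisms.
Variables (C : rawcat) (F : rawfunctor C C) (hC : preadditive C) (hF : additive_functor F).
Local Notation Fo := (fobj F).
Local Notation B := (polycat hC hF).
Local Notation pc := (Defs.pcomp hC hF).

Lemma hgrp (X Y : Ob C) : abgroup_laws (@hzero C X Y) hadd hopp. Proof. by case: hC. Qed.
Lemma comp1l (X Y : Ob C) (f : Hom X Y) : comp (idm Y) f = f.
Proof. by case: hC => _ _ /(_ X Y f) []. Qed.
Lemma comp1r (X Y : Ob C) (f : Hom X Y) : comp f (idm X) = f.
Proof. by case: hC => _ _ /(_ X Y f) []. Qed.
Lemma compDl (X Y Z : Ob C) (g g' : Hom Y Z) (f : Hom X Y) :
  comp (hadd g g') f = hadd (comp g f) (comp g' f). Proof. by case: hC. Qed.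
Lemma compDr (X Y Z : Ob C) (g : Hom Y Z) (f f' : Hom X Y) :
  comp g (hadd f f') = hadd (comp g f) (comp g f'). Proof. by case: hC. Qed.

Lemma powM_comp k (X Y Z : Ob C) (g : Hom Y Z) (f : Hom X Y) :
  powM F k (comp g f) = comp (powM F k g) (powM F k f).
Proof. by elim: k => //= k ->; rewrite (fmap_comp hF). Qed.

Lemma powM_add k (X Y : Ob C) (f f' : Hom X Y) :
  powM F k (hadd f f') = hadd (powM F k f) (powM F k f').
Proof. by elim: k => //= k ->; rewrite (fmap_add hF). Qed.

Lemma powM_id k (X : Ob C) : powM F k (idm X) = idm _.
Proof. by elim: k => //= k ->; rewrite (fmap_id hF). Qed.

Lemma powM_castD k (X X' Y : Ob C) (e : X = X') (f : Hom X Y) :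
  powM F k (castD e f) = castD (congr1 (iter k Fo) e) (powM F k f).
Proof. by subst. Qed.

(* [Phi^m (Phi^j X)] and [Phi^(m + j) X] are equal objects, but not convertible ones. *)
Definition iterDE m j (X : Ob C) : iter m Fo (iter j Fo X) = iter (m + j) Fo X :=
  esym (iterD m j Fo X).

Lemma powM_iterD m j (X Y : Ob C) (f : Hom X Y) :
  powM F (m + j) f = castM (iterDE m j X) (iterDE m j Y) (powM F m (powM F j f)).
Proof.
elim: m => [|m IH]; first by rewrite castM_id.
by rewrite [LHS]/= [powM F m.+1 _]/= IH (fmap_castM F); apply: castM_irr.
Qed.

Lemma phom_ext (X Y : Ob C) (f g : Hom (X : Ob B) Y) :
  (forall k, sval f k = sval g k) -> f = g.
Proof.
case: f g => [f hf] [g hg] /= h.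
have efg : f = g by apply: functional_extensionality_dep.
by subst; rewrite (proof_irrelevance _ hf hg).
Qed.

Definition pmonoc (X Y : Ob C) j (g : Hom (iter j Fo X) Y) (k : nat) : Hom (iter k Fo X) Y :=
  match j =P k with
  | ReflectT e => castD (congr1 (fun m => iter m Fo X) e) g
  | ReflectF _ => hzero
  end.

Lemma pmonoc_supp (X Y : Ob C) j (g : Hom (iter j Fo X) Y) : fsupp (pmonoc g).
Proof. by exists j.+1 => k hk; rewrite /pmonoc; case: eqP => // e; lia. Qed.

Definition pmono (X Y : Ob C) j (g : Hom (iter j Fo X) Y) : Hom (X : Ob B) Y :=
  exist _ (pmonoc g) (pmonoc_supp g).

Lemma pmono_coef (X Y : Ob C) j (g : Hom (iter j Fo X) Y) k (e : iter j Fo X = iter k Fo X) :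
  j = k -> pmonoc g k = castD e g.
Proof. by move=> ejk; rewrite /pmonoc; case: eqP => [e'|//]; apply: castD_irr. Qed.

Lemma pmono_coef_deg (X Y : Ob C) j (g : Hom (iter j Fo X) Y) : pmonoc g j = g.
Proof. by rewrite (@pmono_coef _ _ _ _ _ erefl). Qed.

Lemma pmono_coef0 (X Y : Ob C) j (g : Hom (iter j Fo X) Y) k : j <> k -> pmonoc g k = hzero.
Proof. by move=> ne; rewrite /pmonoc; case: eqP. Qed.

Lemma pmono0E (X Y : Ob C) (f : Hom X Y) : pmono0 F f = pmono (j:=0) f.
Proof. by apply: phom_ext => -[|k] /=; rewrite ?pmono_coef_deg ?pmono_coef0. Qed.

Lemma pmono_add (X Y : Ob C) j (g g' : Hom (iter j Fo X) Y) :
  @hadd B X Y (pmono g) (pmono g') = pmono (hadd g g').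
Proof.
apply: phom_ext => k /=; rewrite /pmonoc; case: eqP => [e|_]; first by rewrite castD_add.
exact: (add00 hC).
Qed.

Lemma pcoefE (X Y Z : Ob C) (g : forall j, Hom (iter j Fo Y) Z)
    (f : forall k, Hom (iter k Fo X) Y) n :
  pcoef g f n = gsum hzero hadd (enum 'I_n.+1)
    (fun j : 'I_n.+1 => castD (iter_split F j X) (comp (g j) (powM F j (f (n - j))))).
Proof. by []. Qed.

Lemma pcoef_eq0 (X Y Z : Ob C) (g : forall j, Hom (iter j Fo Y) Z)
    (f : forall k, Hom (iter k Fo X) Y) n :
  (forall j : 'I_n.+1, comp (g j) (powM F j (f (n - j))) = hzero) -> pcoef g f n = hzero.
Proof. by move=> h; rewrite /pcoef; elim: (enum _) => //= j s ->; rewrite h castD0 (add00 hC). Qed.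

Lemma pcomp_pmono (X Y Z : Ob C) j i (g : Hom (iter j Fo Y) Z) (f : Hom (iter i Fo X) Y) n
    (e : iter j Fo (iter i Fo X) = iter n Fo X) :
  n = j + i -> pc (pmono g) (pmono f) = pmono (castD e (comp g (powM F j f))).
Proof.
move=> en; apply: phom_ext => k /=.
have [->|nkn] := eqVneq k n; last first.
  rewrite [RHS]pmono_coef0; last by move=> ekn; rewrite ekn eqxx in nkn.
  apply: pcoef_eq0 => j'; have [ej|nej] := eqVneq (val j') j.
    rewrite (pmono_coef0 (j:=i)) ?(powM0 hC hF) ?(comp0r hC) // => ei.
    have ej' : nat_of_ord j' = j := ej.
    by move: nkn; have := ltn_ord j'; lia.
  by rewrite (@pmono_coef0 _ _ _ g j') ?(comp0l hC) // => h; rewrite h eqxx in nej.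
have jlt : j < n.+1 by lia.
rewrite pcoefE (gsum_single (hgrp _ _) (i0 := Ordinal jlt)) ?enum_uniq ?mem_enum //=.
  have e' : iter i Fo X = iter (n - j) Fo X by rewrite en addKn.
  rewrite pmono_coef_deg (@pmono_coef _ _ _ _ _ e'); last by lia.
  rewrite powM_castD comp_castD castDK (@pmono_coef _ _ _ _ _ erefl) // castD_id.
  exact: castD_irr.
move=> j' nj; rewrite pmono_coef0 ?(comp0l hC) ?castD0 // => ej.
by move/eqP: nj; apply; apply: val_inj; rewrite /= ej.
Qed.

Definition psum (X Y : Ob C) I (s : seq I) (f : I -> Hom (X : Ob B) Y) : Hom (X : Ob B) Y :=
  gsum (pzero F X Y) (padd hC (X:=X) (Y:=Y)) s f.

Lemma psum_coef (X Y : Ob C) I (s : seq I) (f : I -> Hom (X : Ob B) Y) k :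
  sval (psum s f) k = gsum hzero hadd s (fun i => sval (f i) k).
Proof. by apply: (gsum_morph (phi := fun g : Hom (X : Ob B) Y => sval g k)). Qed.

Lemma phom_decomp (X Y : Ob C) (g : Hom (X : Ob B) Y) :
  exists N, g = psum (iota 0 N) (fun j => pmono (sval g j)).
Proof.
case: g => g [N hN]; exists N; apply: phom_ext => k; rewrite psum_coef /=.
have [lt|ge] := ltnP k N.
  rewrite (gsum_single (hgrp _ _) (i0 := k)) ?iota_uniq ?mem_iota //= ?pmono_coef_deg //.
  by move=> j /eqP nj; rewrite pmono_coef0.
rewrite hN // (gsum0_in (hgrp _ _)) // => j; rewrite mem_iota => /andP[_ jl].
by rewrite pmono_coef0 //; lia.
Qed.

Lemma padd00 (X Y : Ob C) : padd hC (pzero F X Y) (pzero F X Y) = pzero F X Y.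
Proof. by apply: phom_ext => k /=; apply: (add00 hC). Qed.

Lemma pcompDl (X Y Z : Ob C) (g g' : Hom (Y : Ob B) Z) (f : Hom (X : Ob B) Y) :
  pc (padd hC g g') f = padd hC (pc g f) (pc g' f).
Proof.
apply: phom_ext => k /=; rewrite !pcoefE -(gsum_split (hgrp _ _)); apply: gsum_eq => j.
by rewrite compDl castD_add.
Qed.

Lemma pcompDr (X Y Z : Ob C) (g : Hom (Y : Ob B) Z) (f f' : Hom (X : Ob B) Y) :
  pc g (padd hC f f') = padd hC (pc g f) (pc g f').
Proof.
apply: phom_ext => k /=; rewrite !pcoefE -(gsum_split (hgrp _ _)); apply: gsum_eq => j.
by rewrite powM_add compDr castD_add.
Qed.

Lemma pcomp0l (X Y Z : Ob C) (f : Hom (X : Ob B) Y) : pc (pzero F Y Z) f = pzero F X Z.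
Proof. by apply: phom_ext => k /=; apply: pcoef_eq0 => j; apply: (comp0l hC). Qed.

Lemma pcomp0r (X Y Z : Ob C) (g : Hom (Y : Ob B) Z) : pc g (pzero F X Y) = pzero F X Z.
Proof. by apply: phom_ext => k /=; apply: pcoef_eq0 => j; rewrite (powM0 hC hF) (comp0r hC). Qed.

Lemma pcomp_psuml (X Y Z : Ob C) I (s : seq I) (G : I -> Hom (Y : Ob B) Z)
    (f : Hom (X : Ob B) Y) :
  pc (psum s G) f = psum s (fun i => pc (G i) f).
Proof. by elim: s => [|i s IH] /=; rewrite ?pcomp0l // pcompDl IH. Qed.

Lemma pcomp_psumr (X Y Z : Ob C) I (s : seq I) (g : Hom (Y : Ob B) Z)
    (G : I -> Hom (X : Ob B) Y) :
  pc g (psum s G) = psum s (fun i => pc g (G i)).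
Proof. by elim: s => [|i s IH] /=; rewrite ?pcomp0r // pcompDr IH. Qed.

Lemma mact_psum (M : module B) (X Y : Ob C) I (s : seq I) (f : I -> Hom (X : Ob B) Y)
    (x : mob M Y) :
  mact M (psum s f) x = gsum (mzero M X) (@madd B M X) s (fun i => mact M (f i) x).
Proof.
elim: s => [|i s IH] /=; first by apply: (mact_hzero (M:=M)); apply: padd00.
by rewrite (mact_hadd (M:=M)) IH.
Qed.

End PolyMorphisms.

(** * Induction along [i : A -> A_Phi[t]] *)

(* [(i_! Q)(X)] is the direct sum of the [Q(Phi^k X)], and [g t^j] sends the
   summand of index [m] to the summand of index [m + j] through [Q(Phi^m g)]. *)
Section InducedModule.
Variables (C : rawcat) (F : rawfunctor C C) (hC : preadditive C) (hF : additive_functor F).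
Variable Q : module C.
Local Notation Fo := (fobj F).
Local Notation B := (polycat hC hF).
Local Notation pc := (Defs.pcomp hC hF).
Local Notation QG := (mgrp Q).

Definition indsupp (X : Ob C) (b : forall k, mob Q (iter k Fo X)) :=
  exists N, forall k, N <= k -> b k = mzero Q _.

Definition indT (X : Ob C) := {b : forall k, mob Q (iter k Fo X) | indsupp b}.

Lemma ind_ext (X : Ob C) (b b' : indT X) : (forall k, sval b k = sval b' k) -> b = b'.
Proof.
case: b b' => [b hb] [b' hb'] /= h.
have e : b = b' by apply: functional_extensionality_dep.
by subst; rewrite (proof_irrelevance _ hb hb').
Qed.

Definition bnd (X : Ob C) (b : indT X) : nat :=
  sval (constructive_indefinite_description _ (svalP b)).

Lemma bndP (X : Ob C) (b : indT X) k : bnd b <= k -> sval b k = mzero Q _.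
Proof. by rewrite /bnd; case: constructive_indefinite_description => /= n hn; apply: hn. Qed.

Definition izero (X : Ob C) : indT X :=
  exist _ (fun k => mzero Q _) (ex_intro _ 0 (fun _ _ => erefl)).

Definition iadd (X : Ob C) (b b' : indT X) : indT X.
Proof.
exists (fun k => madd Q (sval b k) (sval b' k)); exists (maxn (bnd b) (bnd b')) => k hk.
by rewrite !bndP ?(add0g (QG _)) //; lia.
Defined.

Definition iopp (X : Ob C) (b : indT X) : indT X.
Proof.
exists (fun k => mopp Q (sval b k)); exists (bnd b) => k hk.
by rewrite bndP // (oppg0 (QG _)).
Defined.

Lemma iact_supp (X' X : Ob C) (g : Hom (X' : Ob B) X) (b : indT X) :
  indsupp (fun n => gsum (mzero Q _) (@madd C Q _) (enum 'I_n.+1)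
    (fun k : 'I_n.+1 =>
       mcast (iter_split F k X') (mact Q (powM F k (sval g (n - k))) (sval b k)))).
Proof.
case: g => g [Ng hg] /=; exists (Ng + bnd b) => n hn; apply: (gsum0 (QG _)) => k.
have [lt|ge] := ltnP k (bnd b); last by rewrite bndP // mact0 mcast_zero.
rewrite hg; last by have := ltn_ord k; lia.
by rewrite (powM0 hC hF) mact_hzero ?(add00 hC) // mcast_zero.
Qed.

Definition iact (X' X : Ob C) (g : Hom (X' : Ob B) X) (b : indT X) : indT X' :=
  exist _ _ (iact_supp g b).

Definition ind_raw : rawmodule B := @RawModule B indT izero iadd iopp iact.

Lemma ind_grp (X : Ob C) : abgroup_laws (izero X) (@iadd X) (@iopp X).
Proof.
split.
- by move=> x y w; apply: ind_ext => k /=; rewrite (addgA (QG _)).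
- by move=> x y; apply: ind_ext => k /=; rewrite (addgC (QG _)).
- by move=> x; apply: ind_ext => k /=; rewrite (add0g (QG _)).
- by move=> x; apply: ind_ext => k /=; rewrite (addNg (QG _)).
Qed.

Local Notation isum X := (gsum (izero X) (@iadd X)).

Lemma isum_coef (X : Ob C) I (s : seq I) (f : I -> indT X) k :
  sval (isum X s f) k = gsum (mzero Q _) (@madd C Q _) s (fun i => sval (f i) k).
Proof. by apply: (gsum_morph (phi := fun b : indT X => sval b k)). Qed.

Definition singc (X : Ob C) m (q : mob Q (iter m Fo X)) (k : nat) : mob Q (iter k Fo X) :=
  match m =P k with
  | ReflectT e => mcast (congr1 (fun j => iter j Fo X) e) q
  | ReflectF _ => mzero Q _
  end.

Lemma singc_supp (X : Ob C) m (q : mob Q (iter m Fo X)) : indsupp (singc q).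
Proof. by exists m.+1 => k hk; rewrite /singc; case: eqP => // e; lia. Qed.

Definition single (X : Ob C) m (q : mob Q (iter m Fo X)) : indT X :=
  exist _ _ (singc_supp q).

Lemma singc_eq (X : Ob C) m (q : mob Q (iter m Fo X)) k (e : iter m Fo X = iter k Fo X) :
  m = k -> singc q k = mcast e q.
Proof. by move=> ek; rewrite /singc; case: eqP => // e'; apply: mcast_irr. Qed.

Lemma singc_same (X : Ob C) m (q : mob Q (iter m Fo X)) : singc q m = q.
Proof. by rewrite (@singc_eq _ _ _ _ erefl). Qed.

Lemma singc0 (X : Ob C) m (q : mob Q (iter m Fo X)) k : m <> k -> singc q k = mzero Q _.
Proof. by move=> ne; rewrite /singc; case: eqP. Qed.

Lemma single_add (X : Ob C) m (q q' : mob Q (iter m Fo X)) :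
  iadd (single q) (single q') = single (madd Q q q').
Proof.
apply: ind_ext => k /=; rewrite /singc; case: eqP => [e|_]; first by rewrite mcast_add.
exact: (add0g (QG _)).
Qed.

Lemma ind_decomp (X : Ob C) (b : indT X) :
  b = isum X (iota 0 (bnd b)) (fun k => single (sval b k)).
Proof.
apply: ind_ext => k; rewrite isum_coef /=.
have [lt|ge] := ltnP k (bnd b).
  rewrite (gsum_single (QG _) (i0 := k)) ?iota_uniq ?mem_iota //= ?singc_same //.
  by move=> j /eqP nj; rewrite singc0.
rewrite bndP // (gsum0_in (QG _)) // => j; rewrite mem_iota => /andP[_ jl].
by rewrite singc0 //; lia.
Qed.

Lemma iact_pmono_single (X' X : Ob C) j (g : Hom (iter j Fo X') X) m (q : mob Q (iter m Fo X))
    n (e : iter m Fo (iter j Fo X') = iter n Fo X') :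
  n = m + j -> iact (pmono hC hF g) (single q) = single (mcast e (mact Q (powM F m g) q)).
Proof.
move=> en; apply: ind_ext => p /=.
have [->|npn] := eqVneq p n; last first.
  rewrite [RHS]singc0; last by move=> epn; rewrite epn eqxx in npn.
  apply: (gsum0 (QG _)) => k; have [ek|nek] := eqVneq (val k) m.
    rewrite (@pmono_coef0 _ _ _ _ j g) ?(powM0 hC hF) ?mact_hzero ?(add00 hC) ?mcast_zero //.
    have ek' : nat_of_ord k = m := ek.
    by move=> ej; move: npn; have := ltn_ord k; lia.
  by rewrite singc0 ?mact0 ?mcast_zero // => h; rewrite h eqxx in nek.
have mlt : m < n.+1 by lia.
rewrite (gsum_single (QG _) (i0 := Ordinal mlt)) ?enum_uniq ?mem_enum //=.
  have e' : iter j Fo X' = iter (n - m) Fo X' by rewrite en addKn.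
  rewrite !singc_same (@pmono_coef _ _ _ _ _ g _ e'); last by lia.
  by rewrite powM_castD mact_castD mcastK; apply: mcast_irr.
move=> k nk; rewrite singc0 ?mact0 ?mcast_zero // => ek.
by move/eqP: nk; apply; apply: val_inj; rewrite /= ek.
Qed.

Lemma iact_add (X' X : Ob C) (g : Hom (X' : Ob B) X) (b b' : indT X) :
  iact g (iadd b b') = iadd (iact g b) (iact g b').
Proof.
apply: ind_ext => n /=; rewrite -(gsum_split (QG _)); apply: gsum_eq => k.
by rewrite mact_add mcast_add.
Qed.

Lemma iact_hadd (X' X : Ob C) (g g' : Hom (X' : Ob B) X) (b : indT X) :
  iact (padd hC g g') b = iadd (iact g b) (iact g' b).
Proof.
apply: ind_ext => n /=; rewrite -(gsum_split (QG _)); apply: gsum_eq => k.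
by rewrite (powM_add hF) mact_hadd mcast_add.
Qed.

Lemma iact_izero (X' X : Ob C) (g : Hom (X' : Ob B) X) : iact g (izero X) = izero X'.
Proof. by apply: (abg_idem (ind_grp X')); rewrite -iact_add (add0g (ind_grp X)). Qed.

Lemma iact_gsum (X' X : Ob C) (g : Hom (X' : Ob B) X) I (s : seq I) (f : I -> indT X) :
  iact g (isum X s f) = isum X' s (fun i => iact g (f i)).
Proof. by apply: gsum_morph; [exact: iact_izero | exact: iact_add]. Qed.

Lemma iact_psum (X' X : Ob C) I (s : seq I) (G : I -> Hom (X' : Ob B) X) (b : indT X) :
  iact (psum s G) b = isum X' s (fun i => iact (G i) b).
Proof.
elim: s => [|i s IH] /=; last by rewrite iact_hadd IH.
by apply: (abg_idem (ind_grp X')); rewrite -iact_hadd (padd00 hC hF).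
Qed.

Lemma iact_id (X : Ob C) (b : indT X) : iact (pid F X) b = b.
Proof.
rewrite (ind_decomp b) iact_gsum; apply: gsum_eq => k.
rewrite /pid (pmono0E hC hF) (@iact_pmono_single _ _ 0 _ _ _ k erefl) ?addn0 //.
by rewrite (powM_id hF) mact_id mcast_id.
Qed.

(* On monomials and singles, both sides are [Q(Phi^m (g o Phi^j f))] up to casts. *)
Lemma iact_comp_pmono_single (X'' X' X : Ob C) i j (f : Hom (iter i Fo X'') X')
    (g : Hom (iter j Fo X') X) m (q : mob Q (iter m Fo X)) :
  iact (pc (pmono hC hF g) (pmono hC hF f)) (single q) =
  iact (pmono hC hF f) (iact (pmono hC hF g) (single q)).
Proof.
rewrite (@pcomp_pmono _ _ hC hF _ _ _ _ _ _ _ _ (iterDE F j i X'')) //.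
rewrite (@iact_pmono_single _ _ _ _ _ _ (m + j) (iterDE F m j X')) //.
rewrite (@iact_pmono_single _ _ _ _ _ _ (m + j + i) (iterDE F (m + j) i X'')) //.
rewrite (@iact_pmono_single _ _ _ _ _ _ (m + j + i)
  (etrans (iterDE F m (j + i) X'') (congr1 (fun p => iter p Fo X'') (addnA m j i))));
  last by rewrite addnA.
congr single.
rewrite powM_castD (powM_comp hF) mact_castD mact_comp mcastK.
rewrite powM_iterD mact_castM (mcastK (iterDE F m j X')) mcast_id mcastK.
exact: mcast_irr.
Qed.

Lemma iact_comp (X'' X' X : Ob C) (g : Hom (X' : Ob B) X) (f : Hom (X'' : Ob B) X')
    (b : indT X) :
  iact (pc g f) b = iact f (iact g b).
Proof.
have [Ng ->] := phom_decomp g; have [Nf ->] := phom_decomp f.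
rewrite (ind_decomp b) pcomp_psuml iact_psum.
under gsum_eq => jj do rewrite pcomp_psumr iact_psum.
rewrite iact_psum.
under [RHS]gsum_eq => ii do rewrite iact_psum iact_gsum.
rewrite (gsum_exchange (ind_grp _)); apply: gsum_eq => ii; apply: gsum_eq => jj.
by rewrite !iact_gsum; apply: gsum_eq => kk; apply: iact_comp_pmono_single.
Qed.

Lemma ind_laws : module_laws ind_raw.
Proof.
split=> [X | X Y f x y | X Y f g x | X x | X Y Z g f x].
- exact: ind_grp.
- exact: iact_add.
- exact: iact_hadd.
- exact: iact_id.
- exact: iact_comp.
Qed.

Definition ind : module B := Module ind_laws.

End InducedModule.

Section Restriction.
Variables (C : rawcat) (F : rawfunctor C C) (hC : preadditive C) (hF : additive_functor F).
Local Notation B := (polycat hC hF).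
Local Notation pc := (Defs.pcomp hC hF).

Lemma pmono0_comp (X Y Z : Ob C) (g : Hom Y Z) (f : Hom X Y) :
  pmono0 F (comp g f) = pc (pmono0 F g) (pmono0 F f).
Proof. by rewrite !(pmono0E hC hF) (@pcomp_pmono _ _ hC hF _ _ _ 0 0 _ _ 0 erefl). Qed.

Lemma pmono0_add (X Y : Ob C) (f g : Hom X Y) :
  pmono0 F (hadd f g) = padd hC (pmono0 F f) (pmono0 F g).
Proof. by rewrite !(pmono0E hC hF) -(pmono_add hC hF). Qed.

Lemma restrict_laws (M : module B) : module_laws (restrict M).
Proof.
split=> [X | X Y f x y | X Y f g x | X x | X Y Z g f x] /=.
- exact: (mgrp M X).
- exact: (mact_add (M:=M)).
- by rewrite pmono0_add (mact_hadd (M:=M)).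
- exact: (mact_id (M:=M)).
- by rewrite pmono0_comp (mact_comp (M:=M)).
Qed.

Definition restrict_mod (M : module B) : module C := Module (restrict_laws M).

Lemma restrict_hom (M N : module B) (p : modmap M N) :
  is_modhom p -> is_modhom (M:=restrict_mod M) (N:=restrict_mod N) p.
Proof. by case=> h1 h2; split=> // X Y f x /=; apply: h2. Qed.

End Restriction.

Section InducedUniversalProperty.
Variables (C : rawcat) (F : rawfunctor C C) (hC : preadditive C) (hF : additive_functor F).
Local Notation Fo := (fobj F).
Local Notation B := (polycat hC hF).
Local Notation pc := (Defs.pcomp hC hF).
Variable Q : module C.
Local Notation IQ := (ind hC hF Q).
Local Notation iactB := (@iact _ _ hC hF Q _ _).
Local Notation isum X := (gsum (izero F Q X) (@iadd _ _ Q X)).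

Lemma ind_hom_on_generators (M : module B) (h : modmap IQ M) :
  (forall X (b b' : indT F Q X), h X (iadd b b') = madd M (h X b) (h X b')) ->
  (forall (X' X : Ob C) j (g : Hom (iter j Fo X') X) m (q : mob Q (iter m Fo X)),
      h X' (iactB (pmono hC hF g) (single q)) = mact M (pmono hC hF g) (h X (single q))) ->
  is_modhom h.
Proof.
move=> h_add h_gen; split=> // X' X g b /=.
have h_zero Y : h Y (izero F Q Y) = mzero M Y.
  by apply: (abg_idem (mgrp M Y)); rewrite -h_add (add0g (ind_grp F Q Y)).
have h_sum Y I s f : h Y (isum Y s f) = gsum (mzero M Y) (@madd _ M Y) s (fun i : I => h Y (f i)).
  exact: gsum_morph.
have [Ng ->] := phom_decomp g; rewrite (ind_decomp b).
rewrite iact_psum h_sum mact_psum; apply: gsum_eq => j.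
by rewrite iact_gsum !h_sum mact_gsum; apply: gsum_eq => k.
Qed.

Definition tpow (X : Ob C) k : Hom (X : Ob B) (iter k Fo X) :=
  pmono hC hF (j := k) (idm (iter k Fo X)).

Lemma tpow0 (X : Ob C) : tpow X 0 = pid F X.
Proof. by rewrite /pid (pmono0E hC hF). Qed.

Lemma iact_tpow_single0 (X : Ob C) k (q : mob Q (iter k Fo X)) :
  iactB (tpow X k) (single (m:=0) q) = single q.
Proof.
rewrite /tpow (@iact_pmono_single _ _ hC hF Q _ _ k _ 0 _ k erefl) //.
by rewrite mcast_id /= mact_id.
Qed.

Lemma mact_mcast_restrict (M : rawmodule B) (X Z W : Ob C) (e : Z = W)
    (u : Hom (X : Ob B) W) (z : mob M Z) :
  mact M u (@mcast C (restrict M) _ _ e z) = mact M (castCod (C := B) (esym e) u) z.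
Proof. by subst. Qed.

Lemma castCod_pmono (X W Z : Ob C) j (e : W = Z) (h : Hom (iter j Fo X) W) :
  castCod (C := B) e (pmono hC hF h) = pmono hC hF (castCod e h).
Proof. by subst. Qed.

Lemma comp_castCod_id (Y Z W : Ob C) (e : Z = W) (u : Hom Z Y) :
  comp u (castCod (esym e) (idm W)) = castD e u.
Proof. by subst; apply: (comp1r hC). Qed.

Lemma pcomp_pmono0_tpow (X' X : Ob C) m j (g : Hom (iter j Fo X') X) :
  pc (pmono0 F (powM F m g)) (castCod (C := B) (esym (iterDE F m j X')) (tpow X' (m + j))) =
  pc (tpow X m) (pmono hC hF g).
Proof.
rewrite /tpow castCod_pmono (pmono0E hC hF).
rewrite (@pcomp_pmono _ _ hC hF _ _ _ 0 (m + j) _ _ (m + j) erefl) //.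
rewrite (@pcomp_pmono _ _ hC hF _ _ _ m j _ _ (m + j) (iterDE F m j X')) //.
congr (pmono hC hF _).
by rewrite [powM F 0 _]/= comp_castCod_id (comp1l hC) castD_id; apply: castD_irr.
Qed.

Variable M : module B.
Unset Implicit Arguments.
Variable h0 : modmap Q (restrict_mod M).
Set Implicit Arguments.
Hypothesis hh0 : is_modhom h0.

Definition ind_lift_term (X : Ob C) (b : indT F Q X) (k : nat) : mob M X :=
  mact M (tpow X k) (h0 _ (sval b k)).

(* the extension of [h0 : Q -> i^* M] to [i_! Q -> M]: [b |-> sum_k b_k . t^k] *)
Definition ind_lift : modmap IQ M :=
  fun X b => gsum (mzero M X) (@madd _ M X) (iota 0 (bnd b)) (ind_lift_term b).

Lemma ind_lift_term0 (X : Ob C) (b : indT F Q X) k :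
  sval b k = mzero Q _ -> ind_lift_term b k = mzero M X.
Proof. by move=> h; rewrite /ind_lift_term h (hom0 hh0) mact0. Qed.

Lemma ind_liftE (X : Ob C) (b : indT F Q X) n :
  (forall k, n <= k -> sval b k = mzero Q _) ->
  ind_lift b = gsum (mzero M X) (@madd _ M X) (iota 0 n) (ind_lift_term b).
Proof.
move=> hn; rewrite /ind_lift.
rewrite -(@gsum_iota_widen _ _ _ _ (mgrp M X) _ (bnd b) (maxn n (bnd b))) ?leq_maxr //;
  last by move=> k hk; apply: ind_lift_term0; apply: bndP.
rewrite (@gsum_iota_widen _ _ _ _ (mgrp M X) _ n (maxn n (bnd b))) ?leq_maxl //.
by move=> k hk; apply: ind_lift_term0; apply: hn.
Qed.

Lemma ind_lift_add (X : Ob C) (b b' : indT F Q X) :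
  ind_lift (iadd b b') = madd M (ind_lift b) (ind_lift b').
Proof.
pose N := maxn (bnd b) (bnd b').
have sb k : N <= k -> sval b k = mzero Q _ by move=> hk; apply: bndP; lia.
have sb' k : N <= k -> sval b' k = mzero Q _ by move=> hk; apply: bndP; lia.
have sbb' k : N <= k -> sval (iadd b b') k = mzero Q _.
  by move=> hk /=; rewrite sb ?sb' ?(add0g (mgrp Q _)).
rewrite (ind_liftE sbb') (ind_liftE sb) (ind_liftE sb').
rewrite -(gsum_split (mgrp M X)); apply: gsum_eq => k.
by rewrite /ind_lift_term /= (hom_add hh0) (mact_add (M:=M)).
Qed.

Lemma ind_lift_single (X : Ob C) m (q : mob Q (iter m Fo X)) :
  ind_lift (single q) = mact M (tpow X m) (h0 _ q).
Proof.
rewrite (@ind_liftE _ _ m.+1); last by move=> k hk /=; rewrite singc0 //; lia.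
rewrite (gsum_single (mgrp M X) (i0 := m)) ?iota_uniq ?mem_iota ?leqnn //.
- by rewrite /ind_lift_term /= singc_same.
- by move=> k nk; apply: ind_lift_term0; rewrite /= singc0 // => e; rewrite e eqxx in nk.
Qed.

Lemma ind_lift_hom : is_modhom ind_lift.
Proof.
apply: ind_hom_on_generators; first exact: ind_lift_add.
move=> X' X j g m q.
rewrite (@iact_pmono_single _ _ hC hF Q _ _ _ _ _ _ (m + j) (iterDE F m j X')) //.
rewrite !ind_lift_single (hom_mcast h0) (hom_act hh0) /= mact_mcast_restrict.
by rewrite -!(mact_comp (M:=M)); congr (mact M _ _); apply: pcomp_pmono0_tpow.
Qed.

End InducedUniversalProperty.

Lemma ind_projective (C : rawcat) (F : rawfunctor C C) (hC : preadditive C)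
    (hF : additive_functor F) (Q : module C) :
  projective Q -> projective (ind hC hF Q).
Proof.
move=> hQ M N p g [hp sp] hg.
pose g0 : modmap Q (restrict_mod N) := fun X q => g X (single (m:=0) q).
have hg0 : is_modhom g0.
  split=> [X x y | X Y f x]; first by rewrite /g0 -(hom_add hg) /= single_add.
  rewrite /g0 /= -(hom_act hg) (pmono0E hC hF) /=.
  by rewrite (@iact_pmono_single _ _ hC hF Q _ _ 0 _ 0 _ 0 erefl).
have [h0 [hh0 ph0]] := hQ (restrict_mod M) (restrict_mod N) p g0
  (conj (restrict_hom hp) sp) hg0.
exists (ind_lift h0); split; first exact: ind_lift_hom.
move=> X b; rewrite /ind_lift (hom_gsum hp) [in RHS](ind_decomp b) (hom_gsum hg).
apply: gsum_eq => k; rewrite /ind_lift_term (hom_act hp) ph0 /g0 -(hom_act hg) /=.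
by rewrite iact_tpow_single0.
Qed.

Section InducedMaps.
Variables (C : rawcat) (F : rawfunctor C C) (hC : preadditive C) (hF : additive_functor F).
Local Notation Fo := (fobj F).

Section Functoriality.
Variables (Q Q' : module C).
Unset Implicit Arguments.
Variable phi : modmap Q Q'.
Set Implicit Arguments.
Hypothesis hphi : is_modhom phi.

Lemma indmap_supp (X : Ob C) (b : indT F Q X) : indsupp (fun k => phi _ (sval b k)).
Proof. by exists (bnd b) => k hk /=; rewrite bndP // (hom0 hphi). Qed.

Definition indmap : modmap (ind hC hF Q) (ind hC hF Q') := fun X b => exist _ _ (indmap_supp b).

Lemma indmap_hom : is_modhom indmap.
Proof.
split=> [X x y | X Y f x]; apply: ind_ext => n /=; first by rewrite (hom_add hphi).
rewrite (hom_gsum hphi); apply: gsum_eq => k.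
by rewrite (hom_mcast phi) (hom_act hphi).
Qed.

Lemma indmap_single (X : Ob C) m (q : mob Q (iter m Fo X)) :
  indmap (single q) = single (phi _ q).
Proof.
apply: ind_ext => k /=; rewrite /singc; case: eqP => [e|_]; first by rewrite (hom_mcast phi).
exact: (hom0 hphi).
Qed.

(* Choose a preimage for each of the finitely many nonzero coordinates. *)
Lemma indmap_preimage (X : Ob C) (y : indT F Q' X) :
  (forall k, exists x, phi _ x = sval y k) -> exists x, indmap x = y.
Proof.
move=> hy; pose pre k := sval (constructive_indefinite_description _ (hy k)).
have preP k : phi _ (pre k) = sval y k by rewrite /pre; case: constructive_indefinite_description.
pose x k := if k < bnd y then pre k else mzero Q _.
have xs : indsupp x by exists (bnd y) => k hk; rewrite /x; case: ifP => //; lia.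
exists (exist _ x xs); apply: ind_ext => k /=; rewrite /x; case: ifP => [_|hk]; first exact: preP.
by rewrite (hom0 hphi) bndP //; lia.
Qed.

Lemma indmap_surj : (forall X (y : mob Q' X), exists x, phi X x = y) ->
  forall X (y : indT F Q' X), exists x, indmap x = y.
Proof. by move=> sphi X y; apply: indmap_preimage => k; apply: sphi. Qed.

End Functoriality.

Lemma indmap_exact (M1 M2 M3 : module C) (f : modmap M1 M2) (g : modmap M2 M3)
    (hf : is_modhom f) (hg : is_modhom g) :
  exact_at f g -> exact_at (indmap hf) (indmap hg).
Proof.
move=> ex X y; split; last by case=> x <-; apply: ind_ext => k /=; apply/ex; exists (sval x k).
move=> h; apply: indmap_preimage => k; apply/ex.
by have := congr1 (fun b => sval b k) h.
Qed.

Lemma ind_resolution (P : nat -> module C) (dP : forall n, modmap (P n.+1) (P n))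
    (N : module C) (eps : modmap (P 0) N)
    (hdP : forall n, is_modhom (dP n)) (heps : is_modhom eps) :
  is_resolution dP eps -> is_resolution (fun n => indmap (hdP n)) (indmap heps).
Proof.
case=> _ [_ seps] ex0 exS; split=> [n | | | n].
- exact: indmap_hom.
- by split; [exact: indmap_hom | exact: indmap_surj].
- exact: indmap_exact.
- exact: indmap_exact.
Qed.

Section Shift.
Variable Q : module C.
Local Notation Qt := (twist hF Q).

Definition shiftc (X : Ob C) (a : indT F Qt X) (k : nat) : mob Q (iter k Fo X) :=
  match k return mob Q (iter k Fo X) with 0 => mzero Q X | k'.+1 => sval a k' end.

Lemma shiftc_supp (X : Ob C) (a : indT F Qt X) : indsupp (shiftc a).
Proof. by exists (bnd a).+1 => -[|k] hk //; exact: (bndP hk). Qed.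

(* [Q(Phi^k (Phi X))] is [Q(Phi^(k+1) X)], so [i_! (Q o Phi)] is [i_! Q] shifted by one. *)
Definition shift : modmap (ind hC hF Qt) (ind hC hF Q) := fun X a => exist _ _ (shiftc_supp a).

Lemma shift_single (X : Ob C) n (y : mob Q (iter n.+1 Fo X)) :
  shift (single (Q := Qt) (m := n) y) = single (m := n.+1) y.
Proof.
apply: ind_ext => -[|k] /=; first by rewrite singc0.
rewrite /singc; case: eqP => [e|ne]; case: eqP => [e'|ne'] //; try lia.
by rewrite twist_mcast; apply: mcast_irr.
Qed.

Lemma shift_hom : is_modhom shift.
Proof.
apply: ind_hom_on_generators.
  by move=> X b b'; apply: ind_ext => -[|k] //=; rewrite (add0g (mgrp Q _)).
move=> X' X j g m q /=.
rewrite (@iact_pmono_single _ _ hC hF Qt _ _ _ _ _ _ (m + j) (iterDE F m j X')) //.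
rewrite !shift_single.
rewrite (@iact_pmono_single _ _ hC hF Q _ _ _ _ _ _ (m.+1 + j) (iterDE F m.+1 j X')) //.
by rewrite twist_mcast; congr single; apply: mcast_irr.
Qed.

Unset Implicit Arguments.
Variable phi : modmap Qt Q.
Set Implicit Arguments.
Hypothesis hphi : is_modhom phi.

Definition ind_delta : modmap (ind hC hF Qt) (ind hC hF Q) :=
  fun X a => iadd (shift a) (iopp (indmap hphi a)).

Lemma ind_delta_hom : is_modhom ind_delta.
Proof.
by apply: (hom_sub (M := ind hC hF Qt) (N := ind hC hF Q)); [exact: shift_hom | exact: indmap_hom].
Qed.

End Shift.

Lemma indmap_delta (Q Q' : module C) (psi : modmap Q Q') (phi : modmap (twist hF Q) Q)
    (phi' : modmap (twist hF Q') Q') (hpsi : is_modhom psi) (hphi : is_modhom phi)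
    (hphi' : is_modhom phi')
    (hpsit : is_modhom (M:=twist hF Q) (N:=twist hF Q') (fun X => psi (Fo X))) :
  (forall X x, psi X (phi X x) = phi' X (psi (Fo X) x)) ->
  forall X (a : indT F (twist hF Q) X),
    indmap hpsi (ind_delta hphi a) = ind_delta hphi' (indmap hpsit a).
Proof.
move=> hc X a; apply: ind_ext => -[|k] /=; rewrite (hom_add hpsi) (hom_opp hpsi) hc //.
by rewrite (hom0 hpsi).
Qed.

End InducedMaps.

(** * The dimension shift *)

Section RestrictionSequence.
Variables (C : rawcat) (F : rawfunctor C C) (hC : preadditive C) (hF : additive_functor F).
Local Notation Fo := (fobj F).
Local Notation B := (polycat hC hF).
Local Notation pc := (Defs.pcomp hC hF).
Variable M : module B.
Local Notation N := (restrict_mod M).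
Local Notation Nt := (twist hF N).
Local Notation IN := (ind hC hF N).
Local Notation INt := (ind hC hF Nt).
Local Notation NG := (mgrp N).

Definition tact : modmap Nt N := fun X x => mact M (tpow hC hF X 1) x.

Lemma pcomp_tpow (X : Ob C) m :
  pc (tpow hC hF (iter m Fo X) 1) (tpow hC hF X m) = tpow hC hF X m.+1.
Proof.
rewrite /tpow (@pcomp_pmono _ _ hC hF _ _ _ 1 m _ _ m.+1 (iterDE F 1 m X)) //.
by congr (pmono hC hF _); rewrite /= (fmap_id hF) (comp1l hC); apply: castD_id.
Qed.

Lemma tact_hom : is_modhom tact.
Proof.
split=> [X x y | X Y f x]; first exact: (mact_add (M:=M)).
rewrite /tact /= -!(mact_comp (M:=M)); congr (mact M _ _).
rewrite -![comp _ _]/(pc _ _) /tpow !(pmono0E hC hF).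
rewrite (@pcomp_pmono _ _ hC hF _ _ _ 0 1 _ _ 1 erefl) //.
rewrite (@pcomp_pmono _ _ hC hF _ _ _ 1 0 _ _ 1 erefl) //.
by congr (pmono hC hF _); rewrite /= (comp1l hC) (comp1r hC).
Qed.

Definition counit : modmap IN M := ind_lift (M := M) (fun X (x : mob N X) => x).

Lemma counit_hom : is_modhom counit.
Proof. exact: ind_lift_hom. Qed.

Definition delta : modmap INt IN := ind_delta tact_hom.

Lemma delta_hom : is_modhom delta.
Proof. exact: ind_delta_hom. Qed.

Lemma counit_single (X : Ob C) m (q : mob N (iter m Fo X)) :
  counit (single q) = mact M (tpow hC hF X m) q.
Proof. exact: ind_lift_single. Qed.

Lemma counit_surj (X : Ob C) (y : mob M X) : exists b, counit b = y.
Proof.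
by exists (single (Q:=N) (m:=0) y); rewrite counit_single tpow0 (mact_id (M:=M)).
Qed.

(* [b . t^(k+1) = (b . t) . t^k]: the two halves of [delta] cancel under [counit]. *)
Lemma counit_delta (X : Ob C) (a : indT F Nt X) : counit (delta a) = mzero M X.
Proof.
rewrite /delta /ind_delta (hom_add counit_hom) (hom_opp counit_hom).
suff -> : counit (shift a) = counit (indmap tact_hom a) by apply: (addgN (mgrp M X)).
rewrite (ind_decomp a) (hom_gsum (shift_hom hC hF N)) (hom_gsum (indmap_hom hC hF tact_hom)).
rewrite !(hom_gsum counit_hom); apply: gsum_eq => k.
rewrite shift_single indmap_single !counit_single /tact -(mact_comp (M:=M)).
by rewrite -[comp _ _]/(pc _ _) pcomp_tpow.
Qed.

(* [delta a = 0] gives [a_k = a_(k+1) . t], which propagates the vanishing of [a] downwards. *)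
Lemma delta_inj (X : Ob C) (a : indT F Nt X) : delta a = izero F N X -> a = izero F Nt X.
Proof.
move=> h.
have hc k : sval a k = tact (sval a k.+1).
  by apply: (subg0_eq (NG _)); have := congr1 (fun b => sval b k.+1) h.
have vanish r k : bnd a <= k + r -> sval a k = mzero Nt _.
  elim: r k => [|r IH] k hk; first by apply: bndP; lia.
  by rewrite hc IH ?(hom0 tact_hom) //; lia.
by apply: ind_ext => k; apply: (vanish (bnd a)); lia.
Qed.

Lemma counit_supp0 (X : Ob C) (b : indT F N X) :
  (forall k, 0 < k -> sval b k = mzero N _) -> counit b = sval b 0.
Proof.
move=> hb; rewrite /counit (ind_liftE (M := M) _ (n := 1)) //=.
by rewrite /ind_lift_term (addg0 (mgrp M X)) tpow0 (mact_id (M:=M)).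
Qed.

Lemma delta_single_top (X : Ob C) m (b : indT F N X) :
  (forall k, m.+1 < k -> sval b k = mzero N _) ->
  forall k, m < k ->
    sval (iadd b (iopp (delta (single (Q := Nt) (m := m) (sval b m.+1))))) k = mzero N _.
Proof.
move=> hb [|k] hk /=; first by lia.
have [->|nkm] := eqVneq k m.
  rewrite singc_same singc0; last by lia.
  by rewrite (hom0 tact_hom) (oppg0 (NG _)) (addg0 (NG _)) (addgN (NG _)).
rewrite hb; last by lia.
rewrite [singc _ k]singc0; last by move=> e; rewrite e eqxx in nkm.
rewrite singc0; last by lia.
by rewrite (hom0 tact_hom) (oppg0 (NG _)) (addg0 (NG _)) (oppg0 (NG _)) (addg0 (NG _)).
Qed.

(* Induction on the support: subtracting [delta] of the top coefficient lowers it. *)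
Lemma ker_counit (X : Ob C) (b : indT F N X) :
  counit b = mzero M X -> exists a, delta a = b.
Proof.
suff H m (c : indT F N X) : (forall k, m < k -> sval c k = mzero N _) ->
    counit c = mzero M X -> exists a, delta a = c.
  by apply: (H (bnd b)) => k hk; apply: bndP; lia.
elim: m c => [|m IH] c hc hec.
  exists (izero F Nt X); rewrite (hom0 delta_hom); apply: ind_ext => -[|k] /=.
    by rewrite -(counit_supp0 hc).
  by rewrite hc.
pose a := single (Q := Nt) (m := m) (sval c m.+1).
have hec' : counit (iadd c (iopp (delta a))) = mzero M X.
  rewrite (hom_add counit_hom) -[iopp _]/(mopp IN _) (hom_opp counit_hom).
  by rewrite hec counit_delta (oppg0 (mgrp M X)) (add0g (mgrp M X)).
have [a' ha'] := IH _ (delta_single_top hc) hec'.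
exists (iadd a a'); rewrite -[iadd a a']/(madd INt a a') (hom_add delta_hom) /= ha'.
by apply: ind_ext => k /=; rewrite (addgC (NG _) (sval c k)) (addgA (NG _)) (addgN (NG _))
  (add0g (NG _)).
Qed.

Lemma restriction_short_exact : short_exact delta counit.
Proof.
split=> [| X a | X b]; first by split; [exact: counit_hom | exact: counit_surj].
  exact: delta_inj.
by split; [exact: ker_counit | case=> a <-; exact: counit_delta].
Qed.

End RestrictionSequence.

Section DimensionShift.
Variables (C : rawcat) (F : rawfunctor C C) (hC : preadditive C) (hF : additive_functor F).
Hypotheses (hFo : bijective (fobj F)) (hFm : forall X Y : Ob C, bijective (@fmap C C F X Y)).
Local Notation B := (polycat hC hF).

Lemma pdim_le_restrict_succ (M : module B) d : pdim_le (restrict M) d -> pdim_le M d.+1.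
Proof.
case/pdim_leP=> P [dP [eps [resP' projP zeroP]]].
have resP : is_resolution (N := restrict_mod M) dP eps := resP'.
have projPn := projective_of_pdim_le projP zeroP.
have hdP : forall n, is_modhom (dP n) by case: resP.
have heps : is_modhom (N := restrict_mod M) eps by case: resP => _ [].
have hdPt n := twist_hom hF (hdP n).
have hepst := twist_hom hF heps.
have resPt := twist_resolution hF resP.
have projPt n : projective (twist hF (P n)) := twist_projective hFo hFm (projPn n).
have [am [ham am0 amS]] := chain_map_lift resPt resP (tact_hom M) projPt.
have resC := cone_resolution (ind_resolution hC hF hdP heps resP)
  (ind_resolution hC hF hdPt hepst resPt) (restriction_short_exact M)
  (fun n => ind_delta_hom hC (ham n))
  (indmap_delta hC _ _ _ _ am0) (fun n => indmap_delta hC _ _ _ _ (amS n)).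
apply/pdim_leP; do 3!eexists; split; first exact: resC.
- move=> n _; apply: dsum_projective; first exact: ind_projective.
  by case: n => [|n] /=; [exact: zmod_projective | exact: ind_projective].
- move=> [|n] // hn X [b a] /=; congr pair.
    by apply: ind_ext => k /=; apply: zeroP; lia.
  by case: n hn b a => [|n] hn b a //=; apply: ind_ext => k /=; apply: zeroP; lia.
Qed.

End DimensionShift.

Theorem mainTheorem15 (A : rawcat) (F : rawfunctor A A)
    (hA : additive A) (hF : automorphism F) :
  (forall (M : module (twisted_poly hA hF)) (d : nat),
      pdim_le (istar M) d -> pdim_le M d.+1) /\
  (forall d : nat, gldim_le A d -> gldim_le (twisted_poly hA hF) d.+1).
Proof.
have [_ hFo hFm] := hF.
have step (M : module (twisted_poly hA hF)) d : pdim_le (istar M) d -> pdim_le M d.+1.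
  exact: pdim_le_restrict_succ.
by split=> // d hgl M; apply: step; apply: (hgl (restrict_mod M)).
Qed.
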